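(* Suppose Assumptions (A1)–(A3) hold and let $\{\boldsymbol x_k\},\{\boldsymbol v_k\}$ be generated by Algorithm 1 with parameters $\alpha>\beta>0$ and $\eta>0$. Define $\epsilon_1=(\alpha-\beta)\rho_2(L)-\frac12(2+3L_f^2)$, $\epsilon_2=\beta^2\rho(L)+(2\alpha^2+\beta^2)\rho^2(L)+\frac52L_f^2$, $\epsilon_3=\beta-\frac12-\frac\alpha{2\beta^2}-\frac1{2\beta\rho_2(L)}$, $\epsilon_4=2\beta^2+\frac12$, $\epsilon_5=\frac14-\frac1{2\beta}(\frac1\beta+\frac1{\rho_2(L)}+\frac\alpha\beta)L_f^2$, $\epsilon_6=\frac1{\beta^2}(1+\frac1{\rho_2(L)}+\frac\alpha\beta)L_f^2+\frac{L_f(1+L_f)}2$, and $$V_k=\frac12\|\boldsymbol x_k\|^2_{\boldsymbol K}+\frac12\Big\|\boldsymbol v_k+\frac1\beta\boldsymbol g^0_k\Big\|^2_{\boldsymbol Q+\frac\alpha\beta\boldsymbol K}+\boldsymbol x_k^\top\boldsymbol K\Big(\boldsymbol v_k+\frac1\beta\boldsymbol g^0_k\Big)+n(f(\bar x_k)-f^* ).$$ Then for all $k\in\mathbb N_0$, $$V_{k+1}\le V_k-\eta(\epsilon_1-\eta\epsilon_2)\|\boldsymbol x_k\|^2_{\boldsymbol K}-\eta(\epsilon_3-\eta\epsilon_4)\Big\|\boldsymbol v_k+\frac1\beta\boldsymbol g_k^0\Big\|^2_{\boldsymbol K}-\eta(\epsilon_5-\eta\epsilon_6)\|\bar{\boldsymbol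 g}_k\|^2-\frac\eta4\|\bar{\boldsymbol g}^0_k\|^2.$$
   Context: Setting: $n$ agents on weighted undirected graph $\mathcal G$ with Laplacian $L=(L_{ij})$; $\rho(L)$ largest and $\rho_2(L)$ smallest positive eigenvalue of $L$. $f=\frac1n\sum_if_i$, $f_i:\mathbb R^p\to\mathbb R$, $f^*=\min f$. Assumptions: (A1) $\mathcal G$ connected; (A2) $\arg\min f\ne\emptyset$, $f^*>-\infty$; (A3) each $\nabla f_i$ is $L_f$-Lipschitz. Algorithm 1: $x_{i,0}$ arbitrary, $\sum_jv_{j,0}=\mathbf 0_p$, $x_{i,k+1}=x_{i,k}-\eta(\alpha\sum_jL_{ij}x_{j,k}+\beta v_{i,k}+\nabla f_i(x_{i,k}))$, $v_{i,k+1}=v_{i,k}+\eta\beta\sum_jL_{ij}x_{j,k}$. Notation: $\boldsymbol x_k=\mathrm{col}(x_{i,k})$, $\boldsymbol v_k=\mathrm{col}(v_{i,k})$, $\bar x_k=\frac1n\sum_ix_{i,k}$, $\boldsymbol K=(I_n-\frac1n\mathbf 1\mathbf 1^\top)\otimes I_p$, $\boldsymbol H=\frac1n\mathbf 1\mathbf 1^\top\otimes I_p$, $\|z\|^2_M=z^\top Mz$, $\boldsymbol g_k=\mathrm{col}(\nabla f_i(x_{i,k}))$, $\bar{\boldsymbol g}_k=\boldsymbol H\boldsymbol g_k$, $\boldsymbol g_k^0=\mathrm{col}(\nabla f_i(\bar x_k))$, $\bar{\boldsymbol g}^0_k=\boldsymbol H\boldsymbol g^0_k$. $\boldsymbol Q=R\Lambda_1^{-1}R^\top\otimes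 I_p$, where $[\frac1{\sqrt n}\mathbf 1_n\ R]$ is an orthogonal matrix whose columns of $R$ are orthonormal eigenvectors of $L$ for its nonzero eigenvalues $0<\lambda_2\le\dots\le\lambda_n$ and $\Lambda_1=\mathrm{diag}(\lambda_2,\dots,\lambda_n)$ (so $R\Lambda_1^{-1}R^\top$ is the Moore–Penrose pseudoinverse of $L$). *)

From Stdlib Require Import Reals.
Open Scope R_scope.

(* vectors of R^p are represented as nat -> R, only coordinates l < p matter *)
Definition vec := nat -> R.

Fixpoint fsum (m : nat) (g : nat -> R) : R :=
  match m with
  | O => 0
  | S m' => fsum m' g + g m'
  end.

Definition dot (p : nat) (u w : vec) : R := fsum p (fun l => u l * w l).
Definition sqn (p : nat) (u : vec) : R := dot p u u.
Definition norm (p : nat) (u : vec) : R := sqrt (sqn p u).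
Definition vsub (u w : vec) : vec := fun l => u l - w l.

Definition is_grad (p : nat) (f : vec -> R) (g : vec) (x : vec) : Prop :=
  forall eps, 0 < eps -> exists delta, 0 < delta /\
    forall y, norm p (vsub y x) < delta ->
      Rabs (f y - f x - dot p g (vsub y x)) <= eps * norm p (vsub y x).

(* matrices n x n as nat -> nat -> R *)
Definition mmul (n : nat) (M N : nat -> nat -> R) : nat -> nat -> R :=
  fun i j => fsum n (fun k => M i k * N k j).

Definition laplacian (n : nat) (A : nat -> nat -> R) : nat -> nat -> R :=
  fun i j => if Nat.eqb i j
             then fsum n (fun k => if Nat.eqb k i then 0 else A i k)
             else - A i j.

Inductive reach (n : nat) (A : nat -> nat -> R) (i : nat) : nat -> Prop :=
| reach_refl : reach n A i i
| reach_step : forall j k, reach n A i j -> (k < n)%nat -> 0 < A j k ->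
               reach n A i k.

Definition connected (n : nat) (A : nat -> nat -> R) : Prop :=
  forall i j, (i < n)%nat -> (j < n)%nat -> reach n A i j.

Definition is_eigenvalue (n : nat) (M : nat -> nat -> R) (lam : R) : Prop :=
  exists v : nat -> R, (exists i, (i < n)%nat /\ v i <> 0) /\
    forall i, (i < n)%nat -> fsum n (fun j => M i j * v j) = lam * v i.

Definition largest_eigenvalue (n : nat) (M : nat -> nat -> R) (r : R) : Prop :=
  is_eigenvalue n M r /\ forall lam, is_eigenvalue n M lam -> lam <= r.

Definition smallest_pos_eigenvalue (n : nat) (M : nat -> nat -> R) (r : R)
  : Prop :=
  is_eigenvalue n M r /\ 0 < r /\
  forall lam, is_eigenvalue n M lam -> 0 < lam -> r <= lam.

(* Q is the Moore-Penrose pseudoinverse of M (Penrose conditions) *)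
Definition mp_pinv (n : nat) (M Q : nat -> nat -> R) : Prop :=
  (forall i j, (i < n)%nat -> (j < n)%nat ->
     mmul n (mmul n M Q) M i j = M i j) /\
  (forall i j, (i < n)%nat -> (j < n)%nat ->
     mmul n (mmul n Q M) Q i j = Q i j) /\
  (forall i j, (i < n)%nat -> (j < n)%nat ->
     mmul n M Q i j = mmul n M Q j i) /\
  (forall i j, (i < n)%nat -> (j < n)%nat ->
     mmul n Q M i j = mmul n Q M j i).

Definition Kmat (n : nat) : nat -> nat -> R :=
  fun i j => (if Nat.eqb i j then 1 else 0) - / INR n.

(* stacked vectors z = col(z_0,...,z_{n-1}), z_i in R^p *)
(* z^T (M (x) I_p) w *)
Definition bil (n p : nat) (M : nat -> nat -> R) (z w : nat -> vec) : R :=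
  fsum n (fun i => fsum n (fun j => M i j * dot p (z i) (w j))).
Definition quad (n p : nat) (M : nat -> nat -> R) (z : nat -> vec) : R :=
  bil n p M z z.
Definition sqn_stack (n p : nat) (z : nat -> vec) : R :=
  fsum n (fun i => sqn p (z i)).
Definition avg (n : nat) (z : nat -> vec) : vec :=
  fun l => / INR n * fsum n (fun i => z i l).
Definition Hstack (n : nat) (z : nat -> vec) : nat -> vec := fun _ => avg n z.

Definition fglob (n : nat) (F : nat -> vec -> R) (x : vec) : R :=
  / INR n * fsum n (fun i => F i x).

Definition gstack (G : nat -> vec -> vec) (x : nat -> vec) : nat -> vec :=
  fun i => G i (x i).
Definition g0stack (n : nat) (G : nat -> vec -> vec) (x : nat -> vec)
  : nat -> vec := fun i => G i (avg n x).

Definition wstack (n : nat) (beta : R) (G : nat -> vec -> vec)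
  (x v : nat -> vec) : nat -> vec :=
  fun i l => v i l + / beta * g0stack n G x i l.

Definition Lyap (n p : nat) (alpha beta : R) (Q : nat -> nat -> R)
  (F : nat -> vec -> R) (G : nat -> vec -> vec) (fstar : R)
  (x v : nat -> vec) : R :=
  / 2 * quad n p (Kmat n) x
  + / 2 * quad n p (fun i j => Q i j + alpha / beta * Kmat n i j)
                   (wstack n beta G x v)
  + bil n p (Kmat n) x (wstack n beta G x v)
  + INR n * (fglob n F (avg n x) - fstar).

(* Write a = K x_k and b = K (v_k + g^0_k / beta).  Because the dual variables keep zero
   mean, the average follows the gradient step xbar_{k+1} = xbar_k - eta gbar_k, so the descent
   lemma controls the optimality gap, and V_k is the gap plus the quadratic form
   |a|^2/2 + <b, Q b>/2 + alpha/(2 beta) |b|^2 + <a, b>.  The centred iterates obey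
   a' = a - eta (alpha L x + beta b + K (g - g^0)) and b' = b + eta beta L x + K (g^0' - g^0)/beta;
   expanding the quadratic form, the cross terms in <a, b> and <L x, b> cancel because
   Q L = K, and every remaining term is bounded by Young's inequality, the spectral bounds
   rho2 |K z|^2 <= <K z, L z> <= rho |K z|^2, rho2 <z, Q z> <= |K z|^2 (from the spectral
   theorem for real symmetric matrices) and the Lipschitz continuity of the gradients. *)

From Stdlib Require Import Reals Lra Lia FunctionalExtensionality.
From mathcomp Require all_boot all_algebra Rstruct complex spectral.
Open Scope R_scope.

(** * Quadratic forms of real symmetric matrices *)

Definition dotn (n : nat) (y z : nat -> R) : R := fsum n (fun i => y i * z i).
Definition mulv (n : nat) (M : nat -> nat -> R) (y : nat -> R) : nat -> R :=
  fun i => fsum n (fun j => M i j * y j).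

Module Spectral.
Import all_boot all_algebra Rstruct complex spectral.
Import GRing.Theory Num.Theory.
#[local] Set Implicit Arguments.
#[local] Unset Strict Implicit.

Section RealSymmetric.
Local Open Scope ring_scope.
Local Open Scope sesquilinear_scope.
Local Open Scope complex_scope.
Variable R : rcfType.
Local Notation C := R[i].
Local Notation rc := (real_complex R).

Lemma symmetric_spectral_decomposition n (M : 'M[R]_n) : M^T = M ->
  exists (P : 'M[C]_n) (r : 'rV[R]_n),
    [/\ P \is unitarymx, map_mx rc M = P^t* *m diag_mx (map_mx rc r) *m P
      & forall k, eigenvalue M (r 0 k)].
Proof.
move=> MT; pose Mc := map_mx rc M.
have Mherm : Mc \is hermsymmx.
  apply: realsym_hermsym; last by apply/mxOverP => i j; rewrite mxE complex_real.
  by rewrite qualifE /= expr0 scale1r map_mx_id // /Mc map_trmx MT.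
pose P := spectralmx Mc; pose d := spectral_diag Mc.
have PU : P \is unitarymx := spectral_unitarymx Mc.
have PPt : P *m P^t* = 1%:M by apply/unitarymxP.
have eqM : Mc = P^t* *m diag_mx d *m P.
  by rewrite -invmx_unitary //; apply/orthomx_spectralP/hermitian_normalmx.
have dreal k : d 0 k \is Num.real.
  exact: (mxOverP (hermitian_spectral_diag_real Mherm)).
pose r := \row_k complex.Re (d 0 k).
have dr : map_mx rc r = d.
  by apply/rowP => k; rewrite !mxE RRe_real.
exists P, r; split; rewrite ?dr //.
move=> k; rewrite -(eigenvalue_map (real_complex R)) /= -/Mc.
apply/eigenvalueP; exists (row k P).
  rewrite {1}eqM !mulmxA -row_mul PPt -[row k 1%:M *m _]row_mul mul1mx.
  by rewrite row_diag_mx -scalemxAl -rowE -dr mxE.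
apply/eqP => /(congr1 (mulmx^~ (P^t*))); rewrite -row_mul PPt mul0mx.
by move=> /rowP/(_ k); rewrite !mxE eqxx /= => /eqP; rewrite oner_eq0.
Qed.

Lemma spectral_quadratic_form_nonneg n (M : 'M[R]_n) (a b c : R) :
  M^T = M ->
  (forall lam, eigenvalue M lam -> 0 <= a * lam ^+ 2 + b * lam + c) ->
  forall y : 'cV[R]_n, 0 <= (y^T *m (a *: (M *m M) + b *: M + c%:M) *m y) 0 0.
Proof.
move=> MT Hq y; have [P [r [PU eqM Hr]]] := symmetric_spectral_decomposition MT.
have PtP : P^t* *m P = 1%:M.
  by rewrite -(invmx_unitary PU) mulVmx // unitarymx_unit.
pose e := \row_k (rc (a * r 0 k ^+ 2 + b * r 0 k + c)).
have qM : map_mx rc (a *: (M *m M) + b *: M + c%:M) = P^t* *m diag_mx e *m P.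
  have eE : rc a *: (diag_mx (map_mx rc r) *m diag_mx (map_mx rc r))
      + rc b *: diag_mx (map_mx rc r) + (rc c)%:M = diag_mx e.
    apply/matrixP => i j; rewrite mulmx_diag !mxE.
    by case: (i == j); rewrite /= ?mulr1n ?mulr0n ?expr2 ?mulr0 ?addr0 ?rmorphD ?rmorphM.
  rewrite map_mxD map_mxD !map_mxZ map_mxM map_scalar_mx eqM -eE.
  rewrite !mulmxDr !mulmxDl -!scalemxAr -!scalemxAl mul_mx_scalar -scalemxAl PtP.
  by rewrite scalemx1 !mulmxA mulmxtVK.
have mapC (A : 'M[R]_1) : (A 0 0)%:C = (map_mx rc A) 0 0 by rewrite mxE.
rewrite -ler0c mapC.
set yc := map_mx rc y.
have ycT : map_mx rc y^T = yc^t*.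
  by apply/matrixP => i j; rewrite !mxE; exact/esym/conjc_real.
rewrite !map_mxM qM ycT !mulmxA -(mulmxA _ P yc).
have -> : yc^t* *m P^t* = (P *m yc)^t* by rewrite trmx_mul map_mxM.
rewrite mul_mx_diag mxE; apply: sumr_ge0 => k _; rewrite !mxE mulrAC.
apply: mulr_ge0; first by rewrite mulrC mul_conjC_ge0.
by rewrite ler0c; apply/Hq/Hr.
Qed.

End RealSymmetric.

Section Bridge.
Local Open Scope ring_scope.

Lemma fsum_big (n : nat) (g : nat -> R) : fsum n g = \sum_(i < n) g i.
Proof.
elim: n => [|n IH]; first by rewrite big_ord0.
by rewrite big_ord_recr /= IH.
Qed.

Definition mx_of_fun n (M : nat -> nat -> R) : 'M[R]_n := \matrix_(i, j) M i j.
Definition col_of_fun n (y : nat -> R) : 'cV[R]_n := \col_i y i.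

Lemma mx_eigenvalue_is_eigenvalue n (M : nat -> nat -> R) lam :
  (forall i j, (i < n)%coq_nat -> (j < n)%coq_nat -> M i j = M j i) ->
  eigenvalue (mx_of_fun n M) lam -> is_eigenvalue n M lam.
Proof.
case: n => [|n] Msym /eigenvalueP [v vM v0].
  by case/eqP: v0; apply/rowP => [[]].
pose u i := if (i < n.+1)%N then v 0 (inord i) else 0.
have uE (j : 'I_n.+1) : u j = v 0 j by rewrite /u ltn_ord inord_val.
exists u; split.
  have [j vj] : exists j, v 0 j != 0.
    apply/existsP; apply: contraNT v0 => /existsPn v0.
    by apply/eqP/rowP => j; rewrite mxE; apply/eqP/negbNE.
  by exists j; split; [apply/ssrnat.ltP | rewrite uE; apply/eqP].
move=> i /ssrnat.ltP ilt; rewrite fsum_big /u ilt.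
have := congr1 (fun A : 'rV_n.+1 => A 0 (inord i)) vM; rewrite !mxE => H.
apply: etrans H; apply: eq_bigr => j _.
rewrite ltn_ord inord_val !mxE inordK // mulrC Msym //; exact/ssrnat.ltP.
Qed.

Lemma mx_of_fun_tr n (M : nat -> nat -> R) :
  (forall i j, (i < n)%coq_nat -> (j < n)%coq_nat -> M i j = M j i) ->
  (mx_of_fun n M)^T = mx_of_fun n M.
Proof. by move=> Msym; apply/matrixP => i j; rewrite !mxE Msym //; apply/ssrnat.ltP. Qed.

Lemma quadratic_form_fun n (M : nat -> nat -> R) (a b c : R) (y : nat -> R) :
  (forall i j, (i < n)%coq_nat -> (j < n)%coq_nat -> M i j = M j i) ->
  let Mm := mx_of_fun n M in let ym := col_of_fun n y in
  (ym^T *m (a *: (Mm *m Mm) + b *: Mm + c%:M) *m ym) 0 0 =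
  a * dotn n (mulv n M y) (mulv n M y) + b * dotn n y (mulv n M y) + c * dotn n y y.
Proof.
move=> /mx_of_fun_tr MT Mm ym.
have My (i : 'I_n) k : (Mm *m ym) i k = mulv n M y i.
  by rewrite mxE /mulv fsum_big; apply: eq_bigr => j _; rewrite !mxE.
have E2 : ym^T *m (Mm *m Mm) *m ym = (Mm *m ym)^T *m (Mm *m ym).
  by rewrite trmx_mul MT !mulmxA.
rewrite !mulmxDr !mulmxDl -!scalemxAr -!scalemxAl mul_mx_scalar -scalemxAl.
rewrite E2 -mulmxA !mxE /dotn !fsum_big.
have -> : \sum_j (Mm *m ym)^T 0 j * (Mm *m ym) j 0 =
    \sum_(i < n) mulv n M y i * mulv n M y i.
  by apply: eq_bigr => i _; rewrite [_^T 0 i]mxE !My.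
have -> : \sum_j ym^T 0 j * (Mm *m ym) j 0 = \sum_(i < n) y i * mulv n M y i.
  by apply: eq_bigr => i _; rewrite My !mxE.
by congr (_ + _ * _); apply: eq_bigr => i _; rewrite !mxE.
Qed.
End Bridge.

Local Open Scope R_scope.

Lemma eigen_quadratic_form_nonneg n (M : nat -> nat -> R) (a b c : R) :
  (forall i j, (i < n)%coq_nat -> (j < n)%coq_nat -> M i j = M j i) ->
  (forall lam, is_eigenvalue n M lam -> 0 <= a * (lam * lam) + b * lam + c) ->
  forall y, 0 <= a * dotn n (mulv n M y) (mulv n M y) + b * dotn n y (mulv n M y)
                 + c * dotn n y y.
Proof.
move=> Msym Hq y; apply/RleP.
have := spectral_quadratic_form_nonneg (a:=a) (b:=b) (c:=c) (mx_of_fun_tr Msym).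
move=> /(_ _ (col_of_fun n y)); rewrite quadratic_form_fun //; apply.
move=> lam /mx_eigenvalue_is_eigenvalue ev; apply/RleP; rewrite expr2; exact/Hq/ev.
Qed.
End Spectral.

(** * Finite sums and vectors of R^n *)

Lemma fsum_ext n f g : (forall i, (i < n)%nat -> f i = g i) -> fsum n f = fsum n g.
Proof.
  induction n as [|n IH]; intros H; simpl; auto.
  rewrite IH, (H n); [reflexivity | lia | intros; apply H; lia].
Qed.

Lemma fsum_add n f g : fsum n (fun i => f i + g i) = fsum n f + fsum n g.
Proof. induction n; simpl; [lra | rewrite IHn; lra]. Qed.

Lemma fsum_sub n f g : fsum n (fun i => f i - g i) = fsum n f - fsum n g.
Proof. induction n; simpl; [lra | rewrite IHn; lra]. Qed.

Lemma fsum_scal_l n c f : fsum n (fun i => c * f i) = c * fsum n f.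
Proof. induction n; simpl; [lra | rewrite IHn; lra]. Qed.

Lemma fsum_scal_r n c f : fsum n (fun i => f i * c) = fsum n f * c.
Proof. induction n; simpl; [lra | rewrite IHn; lra]. Qed.

Lemma fsum_const n c : fsum n (fun _ => c) = INR n * c.
Proof. induction n; simpl fsum; [simpl; lra | rewrite IHn, S_INR; lra]. Qed.

Lemma fsum_zero n : fsum n (fun _ => 0) = 0.
Proof. rewrite fsum_const; ring. Qed.

Lemma fsum_nonneg n f : (forall i, (i < n)%nat -> 0 <= f i) -> 0 <= fsum n f.
Proof.
  induction n as [|n IH]; intros H; simpl; [lra |].
  assert (0 <= fsum n f) by (apply IH; intros; apply H; lia).
  assert (0 <= f n) by (apply H; lia). lra.
Qed.

Lemma fsum_le n f g : (forall i, (i < n)%nat -> f i <= g i) -> fsum n f <= fsum n g.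
Proof.
  intros H. assert (0 <= fsum n (fun i => g i - f i)).
  { apply fsum_nonneg. intros i Hi. specialize (H i Hi). lra. }
  rewrite fsum_sub in H0. lra.
Qed.

Lemma fsum_swap n m (f : nat -> nat -> R) :
  fsum n (fun i => fsum m (fun j => f i j)) = fsum m (fun j => fsum n (fun i => f i j)).
Proof.
  induction n; simpl.
  - symmetry. apply fsum_zero.
  - rewrite IHn, <- fsum_add. reflexivity.
Qed.

Lemma fsum_nonneg_eq0 n f : (forall i, (i < n)%nat -> 0 <= f i) -> fsum n f = 0 ->
  forall i, (i < n)%nat -> f i = 0.
Proof.
  induction n as [|n IH]; intros H Hs i Hi; [lia |].
  simpl in Hs.
  assert (0 <= fsum n f) by (apply fsum_nonneg; intros; apply H; lia).
  assert (0 <= f n) by (apply H; lia).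
  destruct (Nat.eq_dec i n) as [-> | Hne]; [lra |].
  apply IH; try lia; [intros; apply H; lia | lra].
Qed.

Lemma fsum_delta n i c : (i < n)%nat ->
  fsum n (fun j => if Nat.eqb i j then c j else 0) = c i.
Proof.
  induction n as [|n IH]; intros Hi; [lia |]. simpl.
  destruct (Nat.eq_dec i n) as [-> | Hne].
  - rewrite Nat.eqb_refl, (fsum_ext n _ (fun _ => 0)), fsum_zero; [ring |].
    intros j Hj. destruct (Nat.eqb_spec n j); [lia | reflexivity].
  - rewrite IH by lia. destruct (Nat.eqb_spec i n); [lia | ring].
Qed.

Definition meanv (n : nat) (y : nat -> R) : R := / INR n * fsum n y.
Definition centerv (n : nat) (y : nat -> R) : nat -> R := fun i => y i - meanv n y.

Lemma dotn_comm n y z : dotn n y z = dotn n z y.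
Proof. unfold dotn. apply fsum_ext; intros; ring. Qed.

Lemma dotn_ext n y y' z z' : (forall i, (i < n)%nat -> y i = y' i) ->
  (forall i, (i < n)%nat -> z i = z' i) -> dotn n y z = dotn n y' z'.
Proof. intros Hy Hz. unfold dotn. apply fsum_ext; intros i Hi. rewrite Hy, Hz by auto. ring. Qed.

Lemma dotn_self_nonneg n y : 0 <= dotn n y y.
Proof. unfold dotn. apply fsum_nonneg. intros. nra. Qed.

Lemma dotn_self_eq0 n y : dotn n y y = 0 -> forall i, (i < n)%nat -> y i = 0.
Proof.
  intros H i Hi.
  assert (y i * y i = 0) by (apply (fsum_nonneg_eq0 n (fun i => y i * y i)); auto; intros; nra).
  nra.
Qed.

Lemma dotn_linl n y c1 c2 z w :
  dotn n (fun j => c1 * z j + c2 * w j) y = c1 * dotn n z y + c2 * dotn n w y.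
Proof. unfold dotn. rewrite <- !fsum_scal_l, <- fsum_add. apply fsum_ext; intros; ring. Qed.

Lemma dotn_linr n y c1 c2 z w :
  dotn n y (fun j => c1 * z j + c2 * w j) = c1 * dotn n y z + c2 * dotn n y w.
Proof. rewrite dotn_comm, dotn_linl, !(dotn_comm n y). reflexivity. Qed.

Lemma mulv_ext n M y y' i : (forall j, (j < n)%nat -> y j = y' j) -> mulv n M y i = mulv n M y' i.
Proof. intros H. unfold mulv. apply fsum_ext; intros j Hj. rewrite H by auto. reflexivity. Qed.

Lemma mulv_lin n M c1 c2 y z i :
  mulv n M (fun j => c1 * y j + c2 * z j) i = c1 * mulv n M y i + c2 * mulv n M z i.
Proof. unfold mulv. rewrite <- !fsum_scal_l, <- fsum_add. apply fsum_ext; intros; ring. Qed.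

Lemma dotn_mulv_lin n M z c1 c2 y w :
  dotn n z (mulv n M (fun j => c1 * y j + c2 * w j))
  = c1 * dotn n z (mulv n M y) + c2 * dotn n z (mulv n M w).
Proof. rewrite <- dotn_linr. apply dotn_ext; auto. intros; apply mulv_lin. Qed.

Lemma mulv_mmul n M N y i : mulv n (mmul n M N) y i = mulv n M (mulv n N y) i.
Proof.
  unfold mulv, mmul.
  rewrite (fsum_ext n _ (fun j => fsum n (fun k => M i k * N k j * y j)))
    by (intros; rewrite <- fsum_scal_r; reflexivity).
  rewrite fsum_swap. apply fsum_ext; intros k Hk.
  rewrite <- fsum_scal_l. apply fsum_ext; intros; ring.
Qed.

Lemma dotn_mulv_sym n M y z : (forall i j, (i < n)%nat -> (j < n)%nat -> M i j = M j i) ->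
  dotn n y (mulv n M z) = dotn n (mulv n M y) z.
Proof.
  intros Hs. unfold dotn, mulv.
  rewrite (fsum_ext n _ (fun i => fsum n (fun j => y i * M i j * z j)))
    by (intros; rewrite <- fsum_scal_l; apply fsum_ext; intros; ring).
  rewrite fsum_swap. apply fsum_ext; intros j Hj.
  rewrite <- fsum_scal_r. apply fsum_ext; intros i Hi. rewrite (Hs i j) by auto. ring.
Qed.

Lemma dotn_centerv_sym n y z : dotn n y (centerv n z) = dotn n (centerv n y) z.
Proof.
  unfold dotn, centerv.
  rewrite (fsum_ext n _ (fun i => y i * z i - meanv n z * y i)) by (intros; ring).
  rewrite (fsum_ext n (fun i => (y i - meanv n y) * z i) (fun i => y i * z i - meanv n y * z i))
    by (intros; ring).
  rewrite !fsum_sub, !fsum_scal_l. unfold meanv. ring.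
Qed.

Lemma meanv_centerv n y : (0 < n)%nat -> meanv n (centerv n y) = 0.
Proof.
  intros Hn. unfold meanv at 1, centerv. rewrite fsum_sub, fsum_const. unfold meanv.
  field. apply not_0_INR. lia.
Qed.

Lemma centerv_idem n y i : (0 < n)%nat -> centerv n (centerv n y) i = centerv n y i.
Proof. intros Hn. unfold centerv at 1. rewrite meanv_centerv by auto. ring. Qed.

Lemma centerv_const n u : (0 < n)%nat ->
  (forall i j, (i < n)%nat -> (j < n)%nat -> u i = u j) ->
  forall i, (i < n)%nat -> centerv n u i = 0.
Proof.
  intros Hn H i Hi. unfold centerv, meanv.
  rewrite (fsum_ext n u (fun _ => u i)), fsum_const by (intros; apply H; auto).
  field. apply not_0_INR. lia.
Qed.

Lemma dotn_self_decomp n y : (0 < n)%nat ->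
  dotn n y y = dotn n (centerv n y) (centerv n y) + INR n * (meanv n y * meanv n y).
Proof.
  intros Hn. unfold dotn, centerv.
  set (m := meanv n y).
  assert (Hs : fsum n y = INR n * m) by (unfold m, meanv; field; apply not_0_INR; lia).
  rewrite (fsum_ext n (fun i => (y i - m) * (y i - m))
             (fun i => y i * y i - (2 * m * y i - m * m))) by (intros; ring).
  rewrite fsum_sub, fsum_sub, fsum_scal_l, fsum_const, Hs. ring.
Qed.

(** * The graph Laplacian and its pseudoinverse *)

Section Laplacian.
Variable n : nat.
Variable A : nat -> nat -> R.
Hypothesis HAsym : forall i j, A i j = A j i.
Hypothesis HAnn : forall i j, 0 <= A i j.

Local Notation L := (laplacian n A).

Let W (i k : nat) : R := if Nat.eqb k i then 0 else A i k.

Lemma laplacian_sym i j : L i j = L j i.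
Proof.
  unfold laplacian. rewrite Nat.eqb_sym.
  destruct (Nat.eqb_spec j i) as [-> |]; auto. rewrite HAsym; auto.
Qed.

Lemma mulv_laplacian y i : (i < n)%nat -> mulv n L y i = fsum n (fun j => W i j * (y i - y j)).
Proof.
  intros Hi. unfold mulv.
  rewrite (fsum_ext n _ (fun j => (if Nat.eqb i j then fsum n (W i) * y j else 0) - W i j * y j)).
  - rewrite fsum_sub, (fsum_delta n i (fun j => fsum n (W i) * y j)) by auto.
    rewrite (fsum_ext n (fun j => W i j * (y i - y j)) (fun j => W i j * y i - W i j * y j))
      by (intros; ring).
    rewrite fsum_sub, fsum_scal_r. reflexivity.
  - intros j _. unfold laplacian, W.
    destruct (Nat.eqb_spec i j) as [-> | Hne].
    + rewrite Nat.eqb_refl. ring.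
    + destruct (Nat.eqb_spec j i); [lia | ring].
Qed.

Lemma mulv_laplacian_const c i : (i < n)%nat -> mulv n L (fun _ => c) i = 0.
Proof.
  intros Hi. rewrite mulv_laplacian by auto.
  rewrite (fsum_ext n _ (fun _ => 0)) by (intros; ring). apply fsum_zero.
Qed.

Lemma fsum_mulv_laplacian y : fsum n (mulv n L y) = 0.
Proof.
  transitivity (dotn n (fun _ => 1) (mulv n L y)).
  { unfold dotn. apply fsum_ext; intros; ring. }
  rewrite dotn_mulv_sym by (intros; apply laplacian_sym). unfold dotn.
  rewrite (fsum_ext n _ (fun _ => 0)) by (intros; rewrite mulv_laplacian_const; auto; ring).
  apply fsum_zero.
Qed.

Lemma laplacian_quadratic y : dotn n y (mulv n L y) =
  / 2 * fsum n (fun i => fsum n (fun j => W i j * ((y i - y j) * (y i - y j)))).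
Proof.
  set (T := fsum n (fun i => fsum n (fun j => W i j * y i * (y i - y j)))).
  assert (H1 : dotn n y (mulv n L y) = T).
  { unfold dotn, T. apply fsum_ext; intros i Hi. rewrite mulv_laplacian by auto.
    rewrite <- fsum_scal_l. apply fsum_ext; intros; ring. }
  assert (H2 : T = fsum n (fun i => fsum n (fun j => W i j * y j * (y j - y i)))).
  { unfold T. rewrite fsum_swap. apply fsum_ext; intros i Hi. apply fsum_ext; intros j Hj.
    unfold W. rewrite Nat.eqb_sym, HAsym. destruct (Nat.eqb i j); ring. }
  assert (H3 : fsum n (fun i => fsum n (fun j => W i j * ((y i - y j) * (y i - y j)))) = T + T).
  { rewrite H2 at 2. unfold T. rewrite <- fsum_add. apply fsum_ext; intros i Hi.
    rewrite <- fsum_add. apply fsum_ext; intros; ring. }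
  rewrite H1, H3. field.
Qed.

Lemma laplacian_psd y : 0 <= dotn n y (mulv n L y).
Proof.
  rewrite laplacian_quadratic. apply Rmult_le_pos; [lra |].
  apply fsum_nonneg; intros i Hi. apply fsum_nonneg; intros j Hj.
  unfold W. destruct (Nat.eqb j i); [lra |]. apply Rmult_le_pos; [auto | apply Rle_0_sqr].
Qed.

Lemma mulv_laplacian_centerv y i : (i < n)%nat -> mulv n L (centerv n y) i = mulv n L y i.
Proof.
  intros Hi. unfold centerv.
  rewrite (mulv_ext n L _ (fun k => 1 * y k + (- meanv n y) * 1)), mulv_lin,
    mulv_laplacian_const by (auto; intros; ring).
  ring.
Qed.

Hypothesis Hconn : connected n A.

(* A vanishing Dirichlet energy forces [y] to agree along every edge, hence along every path. *)
Lemma laplacian_kernel_const y : (forall i, (i < n)%nat -> mulv n L y i = 0) ->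
  forall i j, (i < n)%nat -> (j < n)%nat -> y i = y j.
Proof.
  intros H0.
  set (e i j := W i j * ((y i - y j) * (y i - y j))).
  assert (He : forall i j, 0 <= e i j).
  { intros i j. unfold e, W. destruct (Nat.eqb j i); [lra |].
    apply Rmult_le_pos; [auto | apply Rle_0_sqr]. }
  assert (Hsum : fsum n (fun i => fsum n (e i)) = 0).
  { transitivity (2 * dotn n y (mulv n L y)); [rewrite laplacian_quadratic; unfold e; field |].
    unfold dotn. rewrite (fsum_ext n _ (fun _ => 0)), fsum_zero; [ring |].
    intros i Hi. rewrite H0 by auto. ring. }
  assert (Hedge : forall i j, (i < n)%nat -> (j < n)%nat -> e i j = 0).
  { intros i j Hi Hj.
    apply (fsum_nonneg_eq0 n (e i)); auto.
    exact (fsum_nonneg_eq0 n (fun i => fsum n (e i))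
             (fun k _ => fsum_nonneg n (e k) (fun m _ => He k m)) Hsum i Hi). }
  assert (Hreach : forall i k, reach n A i k -> (i < n)%nat -> (k < n)%nat /\ y k = y i).
  { intros i k Hr. induction Hr as [| j k Hr IH Hk Hpos]; intros Hi; auto.
    destruct (IH Hi) as [Hj Hyj]. split; auto.
    destruct (Nat.eq_dec j k) as [-> | Hne]; auto.
    specialize (Hedge j k Hj Hk). unfold e, W in Hedge.
    destruct (Nat.eqb_spec k j); [lia |].
    assert ((y j - y k) * (y j - y k) = 0) by (apply (Rmult_eq_reg_l (A j k)); lra).
    nra. }
  intros i j Hi Hj. destruct (Hreach i j (Hconn i j Hi Hj) Hi). auto.
Qed.
End Laplacian.

Section LaplacianSpectrum.
Variable n : nat.
Variable A : nat -> nat -> R.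
Hypothesis HAsym : forall i j, A i j = A j i.
Hypothesis HAnn : forall i j, 0 <= A i j.
Variables rho rho2 : R.
Hypothesis Hrho : largest_eigenvalue n (laplacian n A) rho.
Hypothesis Hrho2 : smallest_pos_eigenvalue n (laplacian n A) rho2.

Local Notation L := (laplacian n A).

Lemma eigenvalue_laplacian_nonneg lam : is_eigenvalue n L lam -> 0 <= lam.
Proof.
  intros [v [[i [Hi Hv]] Hev]].
  assert (Hd : dotn n v (mulv n L v) = lam * dotn n v v).
  { unfold dotn. rewrite <- fsum_scal_l. apply fsum_ext; intros j Hj.
    unfold mulv. rewrite Hev by auto. ring. }
  assert (Hpos : 0 < dotn n v v).
  { destruct (Rle_lt_or_eq_dec 0 (dotn n v v) (dotn_self_nonneg n v)) as [H | H]; auto.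
    exfalso. apply Hv. apply (dotn_self_eq0 n v); auto. }
  pose proof (laplacian_psd n A HAsym HAnn v). nra.
Qed.

Lemma laplacian_dim_pos : (0 < n)%nat.
Proof. destruct Hrho2 as [[v [[i [Hi _]] _]] _]. lia. Qed.

Lemma laplacian_spectral_bound a b c :
  (forall lam, 0 <= lam -> lam <= rho -> (lam = 0 \/ rho2 <= lam) ->
     0 <= a * (lam * lam) + b * lam + c) ->
  forall y, 0 <= a * dotn n (mulv n L y) (mulv n L y) + b * dotn n y (mulv n L y)
                 + c * dotn n y y.
Proof.
  intros Hq. apply Spectral.eigen_quadratic_form_nonneg.
  - intros; apply laplacian_sym; auto.
  - intros lam Hl. apply Hq.
    + exact (eigenvalue_laplacian_nonneg lam Hl).
    + destruct Hrho as [_ Hmax]. auto.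
    + destruct Hrho2 as [_ [_ Hmin]].
      destruct (Rle_lt_or_eq_dec 0 lam (eigenvalue_laplacian_nonneg lam Hl)); auto.
Qed.

Lemma laplacian_sq_le y : dotn n (mulv n L y) (mulv n L y) <= rho * rho * dotn n y y.
Proof.
  pose proof (laplacian_spectral_bound (-1) 0 (rho * rho)) as H.
  enough (0 <= -1 * dotn n (mulv n L y) (mulv n L y) + 0 * dotn n y (mulv n L y)
               + rho * rho * dotn n y y) by lra.
  apply H. intros lam H0 H1 _. nra.
Qed.

Lemma laplacian_form_le y : dotn n y (mulv n L y) <= rho * dotn n y y.
Proof.
  pose proof (laplacian_spectral_bound 0 (-1) rho) as H.
  enough (0 <= 0 * dotn n (mulv n L y) (mulv n L y) + -1 * dotn n y (mulv n L y)
               + rho * dotn n y y) by lra.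
  apply H. intros lam H0 H1 _. nra.
Qed.

Lemma laplacian_sq_ge y : rho2 * dotn n y (mulv n L y) <= dotn n (mulv n L y) (mulv n L y).
Proof.
  pose proof (laplacian_spectral_bound 1 (- rho2) 0) as H.
  enough (0 <= 1 * dotn n (mulv n L y) (mulv n L y) + - rho2 * dotn n y (mulv n L y)
               + 0 * dotn n y y) by lra.
  apply H. intros lam H0 _ [-> | H2]; nra.
Qed.
End LaplacianSpectrum.

Section Pseudoinverse.
Variable n : nat.
Variable A : nat -> nat -> R.
Hypothesis HAsym : forall i j, A i j = A j i.
Hypothesis HAnn : forall i j, 0 <= A i j.
Hypothesis Hconn : connected n A.
Variables rho rho2 : R.
Hypothesis Hrho : largest_eigenvalue n (laplacian n A) rho.
Hypothesis Hrho2 : smallest_pos_eigenvalue n (laplacian n A) rho2.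
Variable Q : nat -> nat -> R.
Hypothesis HQ : mp_pinv n (laplacian n A) Q.

Local Notation L := (laplacian n A).

Let n_pos : (0 < n)%nat := laplacian_dim_pos n A rho2 Hrho2.

Let L_sym y z : dotn n y (mulv n L z) = dotn n (mulv n L y) z.
Proof. apply dotn_mulv_sym. intros; apply laplacian_sym; auto. Qed.

Let mulv_mx_ext (M N : nat -> nat -> R) y i :
  (forall i j, (i < n)%nat -> (j < n)%nat -> M i j = N i j) -> (i < n)%nat ->
  mulv n M y i = mulv n N y i.
Proof. intros H Hi. unfold mulv. apply fsum_ext; intros. rewrite H; auto. Qed.

Lemma pinv_LQL y i : (i < n)%nat -> mulv n L (mulv n Q (mulv n L y)) i = mulv n L y i.
Proof.
  intros Hi. destruct HQ as [P1 _]. rewrite <- !mulv_mmul. apply mulv_mx_ext; auto.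
Qed.

Lemma pinv_QLQ y i : (i < n)%nat -> mulv n Q (mulv n L (mulv n Q y)) i = mulv n Q y i.
Proof.
  intros Hi. destruct HQ as [_ [P2 _]]. rewrite <- !mulv_mmul. apply mulv_mx_ext; auto.
Qed.

Lemma pinv_LQ_sym y z : dotn n z (mulv n L (mulv n Q y)) = dotn n (mulv n L (mulv n Q z)) y.
Proof.
  destruct HQ as [_ [_ [P3 _]]].
  rewrite !(dotn_ext n _ _ (mulv n L (mulv n Q _)) (mulv n (mmul n L Q) _)),
    dotn_mulv_sym by (auto; intros; rewrite mulv_mmul; reflexivity).
  apply dotn_ext; auto. intros; rewrite mulv_mmul; reflexivity.
Qed.

Lemma pinv_QL_sym y z : dotn n z (mulv n Q (mulv n L y)) = dotn n (mulv n Q (mulv n L z)) y.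
Proof.
  destruct HQ as [_ [_ [_ P4]]].
  rewrite !(dotn_ext n _ _ (mulv n Q (mulv n L _)) (mulv n (mmul n Q L) _)),
    dotn_mulv_sym by (auto; intros; rewrite mulv_mmul; reflexivity).
  apply dotn_ext; auto. intros; rewrite mulv_mmul; reflexivity.
Qed.

(* By connectivity the kernel of [L] consists of the constant vectors. *)
Let centerv_of_kernel y u :
  (forall i, (i < n)%nat -> mulv n L (fun j => y j - u j) i = 0) -> fsum n u = 0 ->
  forall i, (i < n)%nat -> u i = centerv n y i.
Proof.
  intros Hker Hu i Hi.
  pose proof (centerv_const n _ n_pos (laplacian_kernel_const n A HAsym HAnn Hconn _ Hker) i Hi)
    as Hc.
  unfold centerv, meanv in *. rewrite fsum_sub, Hu in Hc. lra.
Qed.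

Lemma laplacian_pinv y i : (i < n)%nat -> mulv n L (mulv n Q y) i = centerv n y i.
Proof.
  intros Hi. apply centerv_of_kernel; auto; [| apply fsum_mulv_laplacian; auto].
  set (u := fun j => y j - mulv n L (mulv n Q y) j).
  assert (Hw : forall w, dotn n w (mulv n L u) = 0).
  { intros w. rewrite L_sym. unfold u.
    rewrite (dotn_ext n _ _ _ (fun j => 1 * y j + (-1) * mulv n L (mulv n Q y) j)),
      dotn_linr, pinv_LQ_sym by (auto; intros; ring).
    rewrite (dotn_ext n (mulv n L (mulv n Q (mulv n L w))) (mulv n L w) y y); [ring | | auto].
    intros; apply pinv_LQL; auto. }
  apply (dotn_self_eq0 n). apply Hw.
Qed.

Lemma pinv_laplacian y i : (i < n)%nat -> mulv n Q (mulv n L y) i = centerv n y i.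
Proof.
  intros Hi. apply centerv_of_kernel; auto.
  - intros j Hj.
    rewrite (mulv_ext n L _ (fun k => 1 * y k + (-1) * mulv n Q (mulv n L y) k)) by (intros; ring).
    rewrite mulv_lin, pinv_LQL by auto. ring.
  - transitivity (dotn n (fun _ => 1) (mulv n Q (mulv n L y))).
    { unfold dotn. apply fsum_ext; intros; ring. }
    rewrite pinv_QL_sym. unfold dotn.
    rewrite (fsum_ext n _ (fun _ => 0)), fsum_zero; auto.
    intros j Hj. rewrite (mulv_ext n Q _ (fun _ => 0)).
    + unfold mulv. rewrite (fsum_ext n _ (fun _ => 0)), fsum_zero by (intros; ring). ring.
    + intros; apply mulv_laplacian_const; auto.
Qed.

Lemma centerv_pinv y i : (i < n)%nat -> centerv n (mulv n Q y) i = mulv n Q y i.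
Proof. intros Hi. rewrite <- pinv_laplacian, pinv_QLQ; auto. Qed.

Lemma pinv_centerv y i : (i < n)%nat -> mulv n Q (centerv n y) i = mulv n Q y i.
Proof.
  intros Hi. rewrite <- (pinv_QLQ y) by auto.
  apply mulv_ext. intros; rewrite laplacian_pinv; auto.
Qed.

Lemma dotn_pinv_sym y z : dotn n z (mulv n Q y) = dotn n (mulv n Q z) y.
Proof.
  rewrite (dotn_ext n z z _ (centerv n (mulv n Q y))), dotn_centerv_sym
    by (auto; intros; rewrite centerv_pinv; auto).
  rewrite (dotn_ext n _ (mulv n L (mulv n Q z)) _ (mulv n Q y)), <- L_sym
    by (auto; intros; rewrite laplacian_pinv; auto).
  rewrite (dotn_ext n _ (mulv n Q z) _ (centerv n y)), dotn_centerv_sym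
    by (auto; intros; rewrite laplacian_pinv; auto).
  apply dotn_ext; auto. intros; rewrite centerv_pinv; auto.
Qed.

Lemma pinv_form y : dotn n y (mulv n Q y) = dotn n (mulv n Q y) (mulv n L (mulv n Q y)).
Proof.
  rewrite (dotn_ext n y y _ (centerv n (mulv n Q y))), dotn_centerv_sym,
    (dotn_comm n (centerv n y)) by (auto; intros; rewrite centerv_pinv; auto).
  apply dotn_ext; auto. intros; rewrite laplacian_pinv; auto.
Qed.

Lemma pinv_psd y : 0 <= dotn n y (mulv n Q y).
Proof. rewrite pinv_form. apply laplacian_psd; auto. Qed.

Lemma pinv_form_le y : rho2 * dotn n y (mulv n Q y) <= dotn n (centerv n y) (centerv n y).
Proof.
  rewrite pinv_form.
  rewrite <- (dotn_ext n (mulv n L (mulv n Q y)) (centerv n y) (mulv n L (mulv n Q y))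
    (centerv n y)) by (intros; apply laplacian_pinv; auto).
  apply (laplacian_sq_ge n A HAsym HAnn rho rho2 Hrho Hrho2).
Qed.

(* Write [centerv y = L u] with [u = Q y]; then [L] is bounded below on [centerv y] by
   positivity of [L] at [centerv y - rho2 u]. *)
Lemma laplacian_form_ge y :
  rho2 * dotn n (centerv n y) (centerv n y) <= dotn n (centerv n y) (mulv n L y).
Proof.
  set (s := centerv n y). set (u := mulv n Q y).
  assert (HLu : forall i, (i < n)%nat -> mulv n L u i = s i)
    by (intros; apply laplacian_pinv; auto).
  assert (HLs : dotn n s (mulv n L y) = dotn n s (mulv n L s))
    by (apply dotn_ext; auto; intros; unfold s; rewrite mulv_laplacian_centerv; auto).
  assert (Hu : rho2 * dotn n u (mulv n L u) <= dotn n s s).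
  { rewrite <- (dotn_ext n (mulv n L u) s (mulv n L u) s) by auto.
    apply (laplacian_sq_ge n A HAsym HAnn rho rho2 Hrho Hrho2). }
  pose proof (laplacian_psd n A HAsym HAnn (fun i => 1 * s i + (- rho2) * u i)) as Hp.
  rewrite dotn_mulv_lin, !dotn_linl, (L_sym u s), (dotn_ext n (mulv n L u) s s s),
    (dotn_ext n s s (mulv n L u) s) in Hp by auto.
  pose proof Hrho2 as [_ [Hr2 _]]. rewrite HLs. nra.
Qed.
End Pseudoinverse.

(** * Stacked vectors *)

Definition slice (z : nat -> vec) (l : nat) : nat -> R := fun i => z i l.
Definition ip (n p : nat) (z w : nat -> vec) : R := fsum n (fun i => dot p (z i) (w i)).
Definition vadd (z w : nat -> vec) : nat -> vec := fun i l => z i l + w i l.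
Definition vscal (c : R) (z : nat -> vec) : nat -> vec := fun i l => c * z i l.
Definition smul (n : nat) (M : nat -> nat -> R) (z : nat -> vec) : nat -> vec :=
  fun i l => mulv n M (slice z l) i.
Definition center (n : nat) (z : nat -> vec) : nat -> vec :=
  fun i l => centerv n (slice z l) i.
Definition eq_on (n p : nat) (z w : nat -> vec) : Prop :=
  forall i l, (i < n)%nat -> (l < p)%nat -> z i l = w i l.

Section Stacked.
Variables n p : nat.

Lemma eq_on_refl z : eq_on n p z z.
Proof. intros ? ? _ _. reflexivity. Qed.

Lemma ip_comm z w : ip n p z w = ip n p w z.
Proof. unfold ip, dot. apply fsum_ext; intros. apply fsum_ext; intros. ring. Qed.

Lemma ip_ext z z' w w' : eq_on n p z z' -> eq_on n p w w' -> ip n p z w = ip n p z' w'.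
Proof.
  intros H1 H2. unfold ip, dot. apply fsum_ext; intros i Hi. apply fsum_ext; intros l Hl.
  rewrite H1, H2 by auto. reflexivity.
Qed.

Lemma ip_addl z z' w : ip n p (vadd z z') w = ip n p z w + ip n p z' w.
Proof.
  unfold ip, dot, vadd. rewrite <- fsum_add. apply fsum_ext; intros.
  rewrite <- fsum_add. apply fsum_ext; intros. ring.
Qed.

Lemma ip_addr z z' w : ip n p w (vadd z z') = ip n p w z + ip n p w z'.
Proof. rewrite ip_comm, ip_addl, (ip_comm z), (ip_comm z'). reflexivity. Qed.

Lemma ip_scall c z w : ip n p (vscal c z) w = c * ip n p z w.
Proof.
  unfold ip, dot, vscal. rewrite <- fsum_scal_l. apply fsum_ext; intros.
  rewrite <- fsum_scal_l. apply fsum_ext; intros. ring.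
Qed.

Lemma ip_scalr c z w : ip n p w (vscal c z) = c * ip n p w z.
Proof. rewrite ip_comm, ip_scall, ip_comm. reflexivity. Qed.

Lemma ip_self_nonneg z : 0 <= ip n p z z.
Proof. unfold ip, dot. apply fsum_nonneg; intros. apply fsum_nonneg; intros. apply Rle_0_sqr. Qed.

Lemma ip_slices z w : ip n p z w = fsum p (fun l => dotn n (slice z l) (slice w l)).
Proof. unfold ip, dot, dotn, slice. apply fsum_swap. Qed.

Lemma smul_add M z w : eq_on n p (smul n M (vadd z w)) (vadd (smul n M z) (smul n M w)).
Proof.
  intros i l _ _. unfold smul, vadd, slice, mulv. rewrite <- fsum_add.
  apply fsum_ext; intros; ring.
Qed.

Lemma smul_scal M c z : eq_on n p (smul n M (vscal c z)) (vscal c (smul n M z)).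
Proof.
  intros i l _ _. unfold smul, vscal, slice, mulv. rewrite <- fsum_scal_l.
  apply fsum_ext; intros; ring.
Qed.

Lemma smul_ext M z z' : eq_on n p z z' -> eq_on n p (smul n M z) (smul n M z').
Proof. intros H i l Hi Hl. apply mulv_ext. intros; apply H; auto. Qed.

Lemma ip_smul_addr M z w w' :
  ip n p z (smul n M (vadd w w')) = ip n p z (smul n M w) + ip n p z (smul n M w').
Proof. rewrite <- ip_addr. apply ip_ext; [apply eq_on_refl | apply smul_add]. Qed.

Lemma ip_smul_scalr M c z w : ip n p z (smul n M (vscal c w)) = c * ip n p z (smul n M w).
Proof. rewrite <- ip_scalr. apply ip_ext; [apply eq_on_refl | apply smul_scal]. Qed.

Lemma ip_center_sym z w : ip n p z (center n w) = ip n p (center n z) w.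
Proof.
  rewrite !ip_slices. apply fsum_ext; intros l Hl. apply dotn_centerv_sym.
Qed.
End Stacked.

Lemma ip_self_decomp n p z : (0 < n)%nat ->
  ip n p z z = ip n p (center n z) (center n z) + ip n p (Hstack n z) (Hstack n z).
Proof.
  intros Hn. rewrite !ip_slices, <- fsum_add. apply fsum_ext; intros l Hl.
  rewrite (dotn_self_decomp n (slice z l) Hn). unfold dotn at 3, Hstack, slice.
  rewrite fsum_const. reflexivity.
Qed.

Lemma ip_center_le n p z : (0 < n)%nat -> ip n p (center n z) (center n z) <= ip n p z z.
Proof.
  intros Hn. rewrite (ip_self_decomp n p z Hn).
  pose proof (ip_self_nonneg n p (Hstack n z)). lra.
Qed.

Lemma ip_Hstack_le n p z : (0 < n)%nat -> ip n p (Hstack n z) (Hstack n z) <= ip n p z z.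
Proof.
  intros Hn. rewrite (ip_self_decomp n p z Hn).
  pose proof (ip_self_nonneg n p (center n z)). lra.
Qed.

Section StackedGraph.
Variables n p : nat.
Variable A : nat -> nat -> R.
Hypothesis HAsym : forall i j, A i j = A j i.
Hypothesis HAnn : forall i j, 0 <= A i j.
Hypothesis Hconn : connected n A.
Variables rho rho2 : R.
Hypothesis Hrho : largest_eigenvalue n (laplacian n A) rho.
Hypothesis Hrho2 : smallest_pos_eigenvalue n (laplacian n A) rho2.
Variable Q : nat -> nat -> R.
Hypothesis HQ : mp_pinv n (laplacian n A) Q.

Local Notation L := (laplacian n A).

Lemma center_idem z : eq_on n p (center n (center n z)) (center n z).
Proof.
  intros i l Hi _. exact (centerv_idem n (slice z l) i (laplacian_dim_pos n A rho2 Hrho2)).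
Qed.

Lemma ip_center_r z w : ip n p z (center n w) = ip n p (center n z) (center n w).
Proof.
  rewrite <- (ip_ext n p z z _ _ (eq_on_refl n p z) (center_idem w)), ip_center_sym.
  reflexivity.
Qed.

Lemma smul_laplacian_center z : eq_on n p (smul n L (center n z)) (smul n L z).
Proof. intros i l Hi _. exact (mulv_laplacian_centerv n A (slice z l) i Hi). Qed.

Lemma smul_pinv_laplacian z : eq_on n p (smul n Q (smul n L z)) (center n z).
Proof.
  intros i l Hi _. exact (pinv_laplacian n A HAsym HAnn Hconn rho2 Hrho2 Q HQ (slice z l) i Hi).
Qed.

Lemma center_smul_pinv z : eq_on n p (center n (smul n Q z)) (smul n Q z).
Proof.
  intros i l Hi _. exact (centerv_pinv n A HAsym HAnn Hconn rho2 Hrho2 Q HQ (slice z l) i Hi).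
Qed.

Lemma smul_pinv_center z : eq_on n p (smul n Q (center n z)) (smul n Q z).
Proof.
  intros i l Hi _. exact (pinv_centerv n A HAsym HAnn Hconn rho2 Hrho2 Q HQ (slice z l) i Hi).
Qed.

Lemma ip_pinv_sym z w : ip n p z (smul n Q w) = ip n p (smul n Q z) w.
Proof.
  rewrite !ip_slices. apply fsum_ext; intros l Hl.
  exact (dotn_pinv_sym n A HAsym HAnn Hconn rho2 Hrho2 Q HQ (slice w l) (slice z l)).
Qed.

Lemma ip_pinv_center z : ip n p z (smul n Q z) = ip n p (center n z) (smul n Q (center n z)).
Proof.
  rewrite <- (ip_ext n p z z _ _ (eq_on_refl n p z) (center_smul_pinv z)), ip_center_sym.
  apply ip_ext; [apply eq_on_refl |].
  intros i l Hi Hl. symmetry. apply smul_pinv_center; auto.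
Qed.

Lemma ip_pinv_psd z : 0 <= ip n p z (smul n Q z).
Proof.
  rewrite ip_slices. apply fsum_nonneg; intros l Hl.
  exact (pinv_psd n A HAsym HAnn Hconn rho2 Hrho2 Q HQ (slice z l)).
Qed.

Lemma ip_pinv_le z : rho2 * ip n p z (smul n Q z) <= ip n p (center n z) (center n z).
Proof.
  rewrite !ip_slices, <- fsum_scal_l. apply fsum_le; intros l Hl.
  exact (pinv_form_le n A HAsym HAnn Hconn rho rho2 Hrho Hrho2 Q HQ (slice z l)).
Qed.

Lemma ip_laplacian_ge z :
  rho2 * ip n p (center n z) (center n z) <= ip n p (center n z) (smul n L z).
Proof.
  rewrite !ip_slices, <- fsum_scal_l. apply fsum_le; intros l Hl.
  exact (laplacian_form_ge n A HAsym HAnn Hconn rho rho2 Hrho Hrho2 Q HQ (slice z l)).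
Qed.

Lemma ip_laplacian_le z : ip n p z (smul n L z) <= rho * ip n p z z.
Proof.
  rewrite !ip_slices, <- fsum_scal_l. apply fsum_le; intros l Hl.
  exact (laplacian_form_le n A HAsym HAnn rho rho2 Hrho Hrho2 (slice z l)).
Qed.

Lemma ip_laplacian_sq_le z : ip n p (smul n L z) (smul n L z) <= rho * rho * ip n p z z.
Proof.
  rewrite !ip_slices, <- fsum_scal_l. apply fsum_le; intros l Hl.
  exact (laplacian_sq_le n A HAsym HAnn rho rho2 Hrho Hrho2 (slice z l)).
Qed.
End StackedGraph.

Lemma center_eq n (z : nat -> vec) i l : center n z i l = z i l - avg n z l.
Proof. reflexivity. Qed.

Lemma ip_Hstack_r n p z w : (0 < n)%nat ->
  ip n p z (Hstack n w) = ip n p (Hstack n z) (Hstack n w).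
Proof.
  intros Hn. unfold ip, dot, Hstack.
  rewrite fsum_swap, (fsum_swap n p). apply fsum_ext; intros l Hl. cbv beta.
  rewrite fsum_scal_r, fsum_const. unfold avg. field. apply not_0_INR. lia.
Qed.

(** * The descent lemma *)

Lemma sqn_nonneg p u : 0 <= sqn p u.
Proof. unfold sqn, dot. apply fsum_nonneg; intros. apply Rle_0_sqr. Qed.

Lemma norm_mul_norm p u : norm p u * norm p u = sqn p u.
Proof. unfold norm. apply sqrt_sqrt, sqn_nonneg. Qed.

Lemma norm_nonneg p u : 0 <= norm p u.
Proof. unfold norm. apply sqrt_pos. Qed.

Lemma sqn_ext p u w : (forall l, (l < p)%nat -> u l = w l) -> sqn p u = sqn p w.
Proof. intros H. unfold sqn, dot. apply fsum_ext; intros. rewrite H; auto. Qed.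

Lemma sqn_scal p c u : sqn p (fun l => c * u l) = c * c * sqn p u.
Proof. unfold sqn, dot. rewrite <- fsum_scal_l. apply fsum_ext; intros; ring. Qed.

Lemma norm_scal p c u : norm p (fun l => c * u l) = Rabs c * norm p u.
Proof.
  unfold norm. rewrite sqn_scal, sqrt_mult_alt, <- sqrt_Rsqr_abs by apply Rle_0_sqr.
  reflexivity.
Qed.

Lemma dot_sq_le p u w : dot p u w * dot p u w <= sqn p u * sqn p w.
Proof.
  destruct (Rle_lt_or_eq_dec 0 (sqn p w) (sqn_nonneg p w)) as [Hp | Hz].
  - set (t := dot p u w / sqn p w).
    assert (H : 0 <= sqn p (fun l => u l - t * w l)) by apply sqn_nonneg.
    unfold sqn, dot in H.
    rewrite (fsum_ext p _ (fun l => u l * u l - (2 * t * (u l * w l) - t * t * (w l * w l))))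
      in H by (intros; ring).
    rewrite fsum_sub, fsum_sub, fsum_scal_l, fsum_scal_l in H.
    fold (dot p u u) (dot p u w) (dot p w w) (sqn p u) (sqn p w) in H.
    unfold t in H.
    apply (Rmult_le_reg_r (/ sqn p w)); [apply Rinv_0_lt_compat; lra |].
    replace (sqn p u * sqn p w * / sqn p w) with (sqn p u) by (field; lra).
    replace (dot p u w * dot p u w * / sqn p w)
      with (2 * (dot p u w / sqn p w) * dot p u w
            - dot p u w / sqn p w * (dot p u w / sqn p w) * sqn p w) by (field; lra).
    lra.
  - assert (Hw : forall l, (l < p)%nat -> w l = 0).
    { intros l Hl. assert (w l * w l = 0) by
        (apply (fsum_nonneg_eq0 p (fun l => w l * w l)); auto; intros; apply Rle_0_sqr).
      nra. }
    assert (dot p u w = 0).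
    { unfold dot. rewrite (fsum_ext p _ (fun _ => 0)), fsum_zero; auto.
      intros l Hl. rewrite Hw by auto. ring. }
    rewrite H, <- Hz. lra.
Qed.

Lemma dot_le_norm p u w : dot p u w <= norm p u * norm p w.
Proof.
  pose proof (dot_sq_le p u w).
  pose proof (norm_mul_norm p u). pose proof (norm_mul_norm p w).
  pose proof (norm_nonneg p u). pose proof (norm_nonneg p w).
  assert (0 <= norm p u * norm p w) by (apply Rmult_le_pos; auto).
  destruct (Rle_dec (dot p u w) 0); [lra |].
  apply Rsqr_incr_0; unfold Rsqr; [nra | lra | auto].
Qed.

Lemma sqn_le_of_norm_le p u w c :
  norm p u <= c * norm p w -> sqn p u <= c * c * sqn p w.
Proof.
  intros H. rewrite <- !norm_mul_norm. pose proof (norm_nonneg p u). nra.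
Qed.

Section Descent.
Variable p : nat.
Variable F : vec -> R.
Variable Gf : vec -> vec.
Variable Lf : R.
Hypothesis Hgrad : forall x, is_grad p F (Gf x) x.
Hypothesis Hlip : forall x y, norm p (vsub (Gf x) (Gf y)) <= Lf * norm p (vsub x y).

Let ray (x d : vec) (t : R) : vec := fun l => x l + t * d l.

Lemma derivable_pt_lim_ray x d t :
  derivable_pt_lim (fun t => F (ray x d t)) t (dot p (Gf (ray x d t)) d).
Proof.
  intros eps Heps.
  set (z := ray x d t). set (nd := norm p d).
  assert (Hnd : 0 <= nd) by apply norm_nonneg.
  destruct (Hgrad z (eps / (2 * (nd + 1)))) as [delta [Hdelta Hd]].
  { apply Rdiv_lt_0_compat; lra. }
  assert (Hdel' : 0 < delta / (nd + 1)) by (apply Rdiv_lt_0_compat; lra).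
  exists (mkposreal _ Hdel'). intros h Hh0 Hh. simpl in Hh.
  set (y := ray x d (t + h)).
  assert (Hv : norm p (vsub y z) = Rabs h * nd).
  { unfold nd. rewrite <- norm_scal. unfold norm. f_equal. apply sqn_ext.
    intros l _. unfold vsub, y, z, ray. ring. }
  assert (Hdot : dot p (Gf z) (vsub y z) = h * dot p (Gf z) d).
  { unfold dot. rewrite <- fsum_scal_l. apply fsum_ext; intros. unfold vsub, y, z, ray. ring. }
  assert (Hah : 0 < Rabs h) by (apply Rabs_pos_lt; auto).
  assert (Hlt : norm p (vsub y z) < delta).
  { rewrite Hv. apply Rle_lt_trans with (Rabs h * (nd + 1)); [nra |].
    apply (Rmult_lt_reg_r (/ (nd + 1))); [apply Rinv_0_lt_compat; lra |].
    replace (Rabs h * (nd + 1) * / (nd + 1)) with (Rabs h) by (field; lra). exact Hh. }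
  specialize (Hd y Hlt). rewrite Hdot, Hv in Hd.
  replace ((F y - F z) / h - dot p (Gf z) d) with ((F y - F z - h * dot p (Gf z) d) / h)
    by (field; auto).
  unfold Rdiv at 1. rewrite Rabs_mult, Rabs_inv.
  apply Rle_lt_trans with (eps / (2 * (nd + 1)) * (Rabs h * nd) * / Rabs h).
  - apply Rmult_le_compat_r; [left; apply Rinv_0_lt_compat; auto | exact Hd].
  - replace (eps / (2 * (nd + 1)) * (Rabs h * nd) * / Rabs h)
      with (eps * (nd / (2 * (nd + 1)))) by (field; lra).
    assert (nd / (2 * (nd + 1)) < 1).
    { apply (Rmult_lt_reg_r (2 * (nd + 1))); [lra |].
      replace (nd / (2 * (nd + 1)) * (2 * (nd + 1))) with nd by (field; lra). lra. }
    assert (0 <= nd / (2 * (nd + 1)))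
      by (apply Rmult_le_pos; [lra | left; apply Rinv_0_lt_compat; lra]).
    nra.
Qed.

Lemma dot_grad_ray_le x d t : 0 <= t ->
  dot p (Gf (ray x d t)) d - dot p (Gf x) d <= Lf * t * sqn p d.
Proof.
  intros Ht.
  assert (E1 : dot p (Gf (ray x d t)) d - dot p (Gf x) d = dot p (vsub (Gf (ray x d t)) (Gf x)) d).
  { unfold dot. rewrite <- fsum_sub. apply fsum_ext; intros. unfold vsub. ring. }
  assert (E2 : norm p (vsub (ray x d t) x) = t * norm p d).
  { replace (t * norm p d) with (Rabs t * norm p d) by (rewrite Rabs_pos_eq; lra).
    rewrite <- norm_scal. unfold norm. f_equal. apply sqn_ext. intros; unfold vsub, ray. ring. }
  pose proof (dot_le_norm p (vsub (Gf (ray x d t)) (Gf x)) d).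
  pose proof (Hlip (ray x d t) x) as Hl. rewrite E2 in Hl.
  pose proof (norm_nonneg p d). pose proof (norm_mul_norm p d).
  assert (norm p (vsub (Gf (ray x d t)) (Gf x)) * norm p d <= Lf * (t * norm p d) * norm p d)
    by (apply Rmult_le_compat_r; auto).
  nra.
Qed.

(* Apply the mean value theorem to [t |-> F (x + t (y - x)) - t <Gf x, y - x> - t^2 Lf/2 |y - x|^2]
   on [0, 1], whose derivative is nonpositive there. *)
Lemma descent_lemma x y :
  F y <= F x + dot p (Gf x) (vsub y x) + Lf / 2 * sqn p (vsub y x).
Proof.
  set (d := vsub y x). set (c1 := dot p (Gf x) d). set (c2 := Lf / 2 * sqn p d).
  set (psi := fun t => F (ray x d t) - c1 * t - c2 * (t * t)).
  set (psi' := fun t => dot p (Gf (ray x d t)) d - c1 - c2 * (2 * t)).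
  assert (Hder : forall t, derivable_pt_lim psi t (psi' t)).
  { intros t. unfold psi, psi'.
    apply derivable_pt_lim_minus; [apply derivable_pt_lim_minus |].
    - apply derivable_pt_lim_ray.
    - replace c1 with (c1 * 1) at 2 by ring.
      apply derivable_pt_lim_scal, derivable_pt_lim_id.
    - apply derivable_pt_lim_scal.
      replace (2 * t) with (1 * t + t * 1) by ring.
      apply (derivable_pt_lim_mult id id); apply derivable_pt_lim_id. }
  destruct (MVT_cor2 psi psi' 0 1 Rlt_0_1 (fun c _ => Hder c)) as [c [Hc [Hc0 Hc1]]].
  assert (Hpsi' : psi' c <= 0).
  { pose proof (dot_grad_ray_le x d c ltac:(lra)). unfold psi', c2, c1. lra. }
  assert (Hy : ray x d 1 = y).
  { apply functional_extensionality; intros l. unfold ray, d, vsub. ring. }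
  assert (Hx : ray x d 0 = x).
  { apply functional_extensionality; intros l. unfold ray. ring. }
  unfold psi in Hc. rewrite Hy, Hx in Hc. lra.
Qed.
End Descent.

(** * The consensus part of the Lyapunov function *)

Section QuadraticForm.
Variables n p : nat.
Variable Q : nat -> nat -> R.
Hypothesis HQsym : forall z w, ip n p z (smul n Q w) = ip n p (smul n Q z) w.
Hypothesis HQpsd : forall z, 0 <= ip n p z (smul n Q z).

Lemma ip_smul_expand z w :
  ip n p (vadd z w) (smul n Q (vadd z w))
  = ip n p z (smul n Q z) + 2 * ip n p z (smul n Q w) + ip n p w (smul n Q w).
Proof.
  rewrite !ip_smul_addr, !ip_addl, (HQsym w z), (ip_comm n p (smul n Q w) z). ring.
Qed.

Lemma ip_smul_young t z w : 0 < t ->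
  2 * ip n p z (smul n Q w) <= t * ip n p z (smul n Q z) + / t * ip n p w (smul n Q w).
Proof.
  intros Ht. pose proof (HQpsd (vadd (vscal t z) (vscal (-1) w))) as H.
  rewrite ip_smul_expand, !ip_smul_scalr, !ip_scall in H.
  apply (Rmult_le_reg_l t); [lra |].
  replace (t * (t * ip n p z (smul n Q z) + / t * ip n p w (smul n Q w)))
    with (t * t * ip n p z (smul n Q z) + ip n p w (smul n Q w)) by (field; lra).
  nra.
Qed.

Lemma ip_smul_add_le z w :
  ip n p (vadd z w) (smul n Q (vadd z w))
  <= 2 * (ip n p z (smul n Q z) + ip n p w (smul n Q w)).
Proof.
  rewrite ip_smul_expand. pose proof (ip_smul_young 1 z w Rlt_0_1). rewrite Rinv_1 in H. lra.
Qed.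
End QuadraticForm.

Section InnerProduct.
Variables n p : nat.

Lemma ip_expand z w : ip n p (vadd z w) (vadd z w) = ip n p z z + 2 * ip n p z w + ip n p w w.
Proof. rewrite !ip_addl, !ip_addr, (ip_comm n p w z). ring. Qed.

Lemma ip_young t z w : 0 < t -> 2 * ip n p z w <= t * ip n p z z + / t * ip n p w w.
Proof.
  intros Ht. pose proof (ip_self_nonneg n p (vadd (vscal t z) (vscal (-1) w))) as H.
  rewrite ip_expand, !ip_scall, !ip_scalr in H.
  apply (Rmult_le_reg_l t); [lra |].
  replace (t * (t * ip n p z z + / t * ip n p w w)) with (t * t * ip n p z z + ip n p w w)
    by (field; lra).
  nra.
Qed.

Lemma ip_add_le z w : ip n p (vadd z w) (vadd z w) <= 2 * (ip n p z z + ip n p w w).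
Proof. rewrite ip_expand. pose proof (ip_young 1 z w Rlt_0_1). rewrite Rinv_1 in H. lra. Qed.

Lemma ip_add4_le z1 z2 z3 z4 :
  ip n p (vadd (vadd z1 z2) (vadd z3 z4)) (vadd (vadd z1 z2) (vadd z3 z4))
  <= 4 * (ip n p z1 z1 + ip n p z2 z2 + ip n p z3 z3 + ip n p z4 z4).
Proof.
  pose proof (ip_add_le (vadd z1 z2) (vadd z3 z4)).
  pose proof (ip_add_le z1 z2). pose proof (ip_add_le z3 z4). lra.
Qed.
End InnerProduct.

Definition network_energy (n p : nat) (alpha beta : R) (Q : nat -> nat -> R)
  (a b : nat -> vec) : R :=
  / 2 * ip n p a a + / 2 * ip n p b (smul n Q b) + alpha / (2 * beta) * ip n p b b
  + ip n p a b.

Lemma network_energy_ext n p alpha beta Q a a' b b' :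
  eq_on n p a a' -> eq_on n p b b' ->
  network_energy n p alpha beta Q a b = network_energy n p alpha beta Q a' b'.
Proof.
  intros Ha Hb. unfold network_energy.
  rewrite (ip_ext n p a a' a a' Ha Ha), (ip_ext n p b b' b b' Hb Hb),
    (ip_ext n p a a' b b' Ha Hb), (ip_ext n p b b' _ _ Hb (smul_ext n p Q b b' Hb)).
  reflexivity.
Qed.

Section NetworkEnergy.
Variables n p : nat.
Variable Q : nat -> nat -> R.
Hypothesis HQsym : forall z w, ip n p z (smul n Q w) = ip n p (smul n Q z) w.
Hypothesis HQpsd : forall z, 0 <= ip n p z (smul n Q z).
Variables alpha beta eta : R.
Hypothesis Hb : 0 < beta.

Local Notation V := (network_energy n p alpha beta Q).

Lemma network_energy_step a b u s :
  V (vadd a (vscal (- eta) u)) (vadd b s) - V a b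
  = - eta * ip n p a u + ip n p a s - eta * ip n p u b + ip n p b (smul n Q s)
    + alpha / beta * ip n p b s
    + / 2 * ip n p (vadd (vscal eta u) (vscal (-1) s)) (vadd (vscal eta u) (vscal (-1) s))
    + / 2 * (alpha / beta - 1) * ip n p s s + / 2 * ip n p s (smul n Q s).
Proof.
  unfold network_energy.
  rewrite ip_smul_expand, !ip_expand by auto.
  rewrite !ip_addl, !ip_addr, !ip_scall, !ip_scalr.
  field. lra.
Qed.

Variables rho rho2 : R.
Hypothesis Hab : beta < alpha.
Hypothesis Heta : 0 < eta.
Hypothesis Hr2 : 0 < rho2.
Variables a b l D E : nat -> vec.
Hypothesis HQl : forall z, ip n p z (smul n Q l) = ip n p z a.
Hypothesis Hal_ge : rho2 * ip n p a a <= ip n p a l.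
Hypothesis Hal_le : ip n p a l <= rho * ip n p a a.
Hypothesis Hll : ip n p l l <= rho * rho * ip n p a a.
Hypothesis Hbq : rho2 * ip n p b (smul n Q b) <= ip n p b b.
Hypothesis HEq : rho2 * ip n p E (smul n Q E) <= ip n p E E.

Let u := vadd (vscal alpha l) (vadd (vscal beta b) D).
Let s := vadd (vscal (eta * beta) l) E.

Lemma network_linear_terms_le :
  - eta * ip n p a u + ip n p a s - eta * ip n p u b + ip n p b (smul n Q s)
  + alpha / beta * ip n p b s
  <= - eta * ((alpha - beta) * rho2 - 1) * ip n p a a
     - eta * (beta - / 2 - alpha * / beta * / beta / 2 - / beta * / rho2 / 2) * ip n p b b
     + eta * ip n p D D + / eta * (1 + alpha + beta * / rho2) / 2 * ip n p E E.
Proof.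
  unfold u, s.
  rewrite !ip_addr, !ip_scalr, !ip_addl, !ip_scall, ip_smul_addr, ip_smul_scalr, HQl.
  rewrite (ip_comm n p l b), (ip_comm n p D b), (ip_comm n p b a).
  replace (alpha / beta * (eta * beta * ip n p b l + ip n p b E))
    with (alpha * eta * ip n p b l + alpha / beta * ip n p b E) by (field; lra).
  assert (Hib : 0 < / beta) by (apply Rinv_0_lt_compat; lra).
  assert (Hie : 0 < / eta) by (apply Rinv_0_lt_compat; lra).
  assert (Hir : 0 < / rho2) by (apply Rinv_0_lt_compat; lra).
  assert (Hal : eta * (alpha - beta) * (rho2 * ip n p a a) <= eta * (alpha - beta) * ip n p a l)
    by (apply Rmult_le_compat_l; nra).
  assert (HaD : 0 <= eta * ip n p (vadd a D) (vadd a D))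
    by (apply Rmult_le_pos; [lra | apply ip_self_nonneg]).
  assert (HbD : 0 <= eta * ip n p (vadd b D) (vadd b D))
    by (apply Rmult_le_pos; [lra | apply ip_self_nonneg]).
  rewrite ip_expand in HaD, HbD.
  pose proof (ip_young n p eta a E Heta) as HaE.
  assert (Hebt : 0 < eta / beta) by (apply Rdiv_lt_0_compat; lra).
  pose proof (ip_smul_young n p Q HQsym HQpsd (eta / beta) b E Hebt) as HbQE.
  replace (/ (eta / beta)) with (beta * / eta) in HbQE by (field; lra).
  assert (Hbq' : 0 <= eta / beta * (/ rho2 * ip n p b b - ip n p b (smul n Q b))).
  { apply Rmult_le_pos; [lra |]. apply (Rmult_le_reg_l rho2); [lra |].
    rewrite Rmult_minus_distr_l, <- Rmult_assoc, Rinv_r; lra. }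
  assert (HEq' : 0 <= beta * / eta * (/ rho2 * ip n p E E - ip n p E (smul n Q E))).
  { apply Rmult_le_pos; [nra |]. apply (Rmult_le_reg_l rho2); [lra |].
    rewrite Rmult_minus_distr_l, <- Rmult_assoc, Rinv_r; lra. }
  assert (HbE : alpha / beta * (2 * ip n p b E)
                <= alpha * eta * / beta * / beta * ip n p b b + alpha * / eta * ip n p E E).
  { replace (alpha * eta * / beta * / beta * ip n p b b + alpha * / eta * ip n p E E)
      with (alpha / beta * (eta / beta * ip n p b b + / (eta / beta) * ip n p E E))
      by (field; lra).
    apply Rmult_le_compat_l; [unfold Rdiv; nra |].
    apply ip_young; exact Hebt. }
  unfold Rdiv in *. lra.
Qed.

Lemma network_quadratic_terms_le :
  / 2 * ip n p (vadd (vscal eta u) (vscal (-1) s)) (vadd (vscal eta u) (vscal (-1) s))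
  + / 2 * (alpha / beta - 1) * ip n p s s + / 2 * ip n p s (smul n Q s)
  <= eta ^ 2 * ((2 * alpha ^ 2 + beta ^ 2) * rho ^ 2 + beta ^ 2 * rho) * ip n p a a
     + 2 * eta ^ 2 * beta ^ 2 * ip n p b b + 2 * eta ^ 2 * ip n p D D
     + (1 + alpha / beta + / rho2) * ip n p E E.
Proof.
  assert (Hd : eq_on n p (vadd (vscal eta u) (vscal (-1) s))
     (vadd (vadd (vscal (eta * (alpha - beta)) l) (vscal (eta * beta) b))
           (vadd (vscal eta D) (vscal (-1) E))))
    by (intros i k _ _; unfold u, s, vadd, vscal; ring).
  rewrite (ip_ext n p _ _ _ _ Hd Hd).
  pose proof (ip_add4_le n p (vscal (eta * (alpha - beta)) l) (vscal (eta * beta) b)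
                (vscal eta D) (vscal (-1) E)) as H4.
  pose proof (ip_add_le n p (vscal (eta * beta) l) E) as Hs.
  pose proof (ip_smul_add_le n p Q HQsym HQpsd (vscal (eta * beta) l) E) as HsQ.
  fold s in Hs, HsQ.
  rewrite !ip_scall, !ip_scalr in H4. rewrite !ip_scall, !ip_scalr in Hs.
  rewrite !ip_smul_scalr, !ip_scall, HQl in HsQ.
  rewrite (ip_comm n p l a) in HsQ.
  assert (Hs' : (alpha / beta - 1) * ip n p s s
     <= 2 * eta ^ 2 * ((alpha - beta) * beta) * ip n p l l + 2 * (alpha / beta - 1) * ip n p E E).
  { replace (2 * eta ^ 2 * ((alpha - beta) * beta) * ip n p l l
             + 2 * (alpha / beta - 1) * ip n p E E)
      with ((alpha / beta - 1) * (2 * (eta * beta * (eta * beta * ip n p l l) + ip n p E E)))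
      by (field; lra).
    apply Rmult_le_compat_l; [| exact Hs].
    apply (Rmult_le_reg_r beta); [lra |]. unfold Rdiv. field_simplify; lra. }
  assert (Hc : 0 <= eta ^ 2 * ((alpha - beta) * (2 * alpha - beta))) by (apply Rmult_le_pos; nra).
  assert (Hl : eta ^ 2 * ((alpha - beta) * (2 * alpha - beta)) * ip n p l l
               <= eta ^ 2 * ((alpha - beta) * (2 * alpha - beta)) * (rho * rho * ip n p a a))
    by (apply Rmult_le_compat_l; auto).
  assert (Hrr : 0 <= eta ^ 2 * (3 * alpha * beta) * (rho * rho * ip n p a a)).
  { apply Rmult_le_pos; [nra |]. apply Rmult_le_pos; [nra | apply ip_self_nonneg]. }
  assert (Hla : eta ^ 2 * beta ^ 2 * ip n p a l <= eta ^ 2 * beta ^ 2 * (rho * ip n p a a))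
    by (apply Rmult_le_compat_l; [nra | auto]).
  assert (HEq' : ip n p E (smul n Q E) <= / rho2 * ip n p E E).
  { apply (Rmult_le_reg_l rho2); [lra |]. rewrite <- Rmult_assoc, Rinv_r; lra. }
  unfold Rdiv in *. lra.
Qed.

Lemma network_energy_descent :
  V (vadd a (vscal (- eta) u)) (vadd b s) - V a b
  <= - eta * ((alpha - beta) * rho2 - 1) * ip n p a a
     - eta * (beta - / 2 - alpha * / beta * / beta / 2 - / beta * / rho2 / 2) * ip n p b b
     + eta * ip n p D D + / eta * (1 + alpha + beta * / rho2) / 2 * ip n p E E
     + eta ^ 2 * ((2 * alpha ^ 2 + beta ^ 2) * rho ^ 2 + beta ^ 2 * rho) * ip n p a a
     + 2 * eta ^ 2 * beta ^ 2 * ip n p b b + 2 * eta ^ 2 * ip n p D D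
     + (1 + alpha / beta + / rho2) * ip n p E E.
Proof.
  rewrite network_energy_step by exact HQsym.
  pose proof network_linear_terms_le. pose proof network_quadratic_terms_le. lra.
Qed.
End NetworkEnergy.

Lemma bil_eq_ip_smul n p M z w : bil n p M z w = ip n p z (smul n M w).
Proof.
  unfold bil, ip, smul, mulv, slice, dot. apply fsum_ext; intros i Hi.
  rewrite (fsum_ext n _ (fun j => fsum p (fun l => M i j * z i l * w j l)))
    by (intros; rewrite <- fsum_scal_l; apply fsum_ext; intros; ring).
  rewrite fsum_swap. apply fsum_ext; intros l Hl.
  rewrite <- fsum_scal_l. apply fsum_ext; intros; ring.
Qed.

Lemma smul_Kmat n p z : eq_on n p (smul n (Kmat n) z) (center n z).
Proof.
  intros i l Hi _. unfold smul, center, centerv, meanv, mulv, Kmat, slice.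
  rewrite (fsum_ext n _ (fun j => (if Nat.eqb i j then z j l else 0) - / INR n * z j l))
    by (intros j _; destruct (Nat.eqb i j); ring).
  rewrite fsum_sub, fsum_delta, fsum_scal_l by auto. reflexivity.
Qed.

Lemma smul_mx_add n p M N c z :
  eq_on n p (smul n (fun i j => M i j + c * N i j) z) (vadd (smul n M z) (vscal c (smul n N z))).
Proof.
  intros i l _ _. unfold smul, mulv, vadd, vscal. rewrite <- fsum_scal_l, <- fsum_add.
  apply fsum_ext; intros; ring.
Qed.

(** * Algorithm 1 *)

Section Algorithm.
Variables n p : nat.
Variable A : nat -> nat -> R.
Hypothesis HAsym : forall i j, A i j = A j i.
Hypothesis HAnn : forall i j, 0 <= A i j.
Hypothesis Hconn : connected n A.
Variables rho rho2 : R.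
Hypothesis Hrho : largest_eigenvalue n (laplacian n A) rho.
Hypothesis Hrho2 : smallest_pos_eigenvalue n (laplacian n A) rho2.
Variable Q : nat -> nat -> R.
Hypothesis HQ : mp_pinv n (laplacian n A) Q.
Variable F : nat -> vec -> R.
Variable G : nat -> vec -> vec.
Hypothesis HG : forall i x, (i < n)%nat -> is_grad p (F i) (G i x) x.
Variable fstar : R.
Variable Lf : R.
Hypothesis HLip : forall i x y, (i < n)%nat ->
  norm p (vsub (G i x) (G i y)) <= Lf * norm p (vsub x y).
Variables alpha beta eta : R.
Hypothesis Hab : beta < alpha.
Hypothesis Hb : 0 < beta.
Hypothesis Heta : 0 < eta.
Variables X Vv : nat -> nat -> vec.
Hypothesis Hv0 : forall l, (l < p)%nat -> fsum n (fun j => Vv 0%nat j l) = 0.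
Hypothesis HXup : forall k i l, (i < n)%nat -> (l < p)%nat ->
  X (S k) i l = X k i l - eta * (alpha * fsum n (fun j => laplacian n A i j * X k j l)
                                 + beta * Vv k i l + G i (X k i) l).
Hypothesis HVup : forall k i l, (i < n)%nat -> (l < p)%nat ->
  Vv (S k) i l = Vv k i l + eta * beta * fsum n (fun j => laplacian n A i j * X k j l).

Local Notation L := (laplacian n A).

Let n_pos : (0 < n)%nat := laplacian_dim_pos n A rho2 Hrho2.

Let w k := wstack n beta G (X k) (Vv k).
Let g k := gstack G (X k).
Let g0 k := g0stack n G (X k).
Let disagreement k : nat -> vec := fun i l => g k i l - g0 k i l.
Let drift k : nat -> vec := fun i l => / beta * (g0 (S k) i l - g0 k i l).

Let fsum_laplacian_zero (z : nat -> vec) l : fsum n (fun j => fsum n (fun m => L j m * z m l)) = 0.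
Proof. exact (fsum_mulv_laplacian n A HAsym (slice z l)). Qed.

Lemma fsum_dual_zero k l : (l < p)%nat -> fsum n (fun j => Vv k j l) = 0.
Proof.
  intros Hl. induction k as [| k IH]; auto.
  rewrite (fsum_ext n _ (fun j => Vv k j l + eta * beta * fsum n (fun m => L j m * X k m l)))
    by (intros; apply HVup; auto).
  rewrite fsum_add, fsum_scal_l, IH, fsum_laplacian_zero. ring.
Qed.

Lemma avg_primal_step k l : (l < p)%nat ->
  avg n (X (S k)) l = avg n (X k) l - eta * avg n (g k) l.
Proof.
  intros Hl. unfold avg.
  rewrite (fsum_ext n _ (fun i => X k i l - eta * (alpha * fsum n (fun j => L i j * X k j l)
                                   + beta * Vv k i l + G i (X k i) l)))
    by (intros; apply HXup; auto).
  rewrite fsum_sub, fsum_scal_l, !fsum_add, !fsum_scal_l, fsum_dual_zero, fsum_laplacian_zero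
    by auto.
  unfold g, gstack. ring.
Qed.

Lemma Lyap_eq x v :
  Lyap n p alpha beta Q F G fstar x v
  = network_energy n p alpha beta Q (center n x) (center n (wstack n beta G x v))
    + INR n * (fglob n F (avg n x) - fstar).
Proof.
  set (z := wstack n beta G x v).
  unfold Lyap, network_energy, quad. fold z. rewrite !bil_eq_ip_smul.
  rewrite (ip_ext n p x x _ _ (eq_on_refl n p x) (smul_Kmat n p x)),
    (ip_ext n p x x _ _ (eq_on_refl n p x) (smul_Kmat n p z)),
    (ip_ext n p z z _ _ (eq_on_refl n p z) (smul_mx_add n p Q (Kmat n) (alpha / beta) z)),
    ip_addr, ip_scalr, (ip_ext n p z z _ _ (eq_on_refl n p z) (smul_Kmat n p z)).
  rewrite (ip_pinv_center n p A HAsym HAnn Hconn rho2 Hrho2 Q HQ z),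
    (ip_center_r n p A rho2 Hrho2 x x), (ip_center_r n p A rho2 Hrho2 x z),
    (ip_center_r n p A rho2 Hrho2 z z).
  field. lra.
Qed.

Let avg_dual_gap k l : (l < p)%nat -> avg n (w k) l = / beta * avg n (g0 k) l.
Proof.
  intros Hl. unfold avg, w, wstack.
  rewrite fsum_add, fsum_scal_l, fsum_dual_zero by auto. unfold g0. ring.
Qed.

Lemma center_primal_step k :
  eq_on n p (center n (X (S k)))
    (vadd (center n (X k))
       (vscal (- eta) (vadd (vscal alpha (smul n L (X k)))
                            (vadd (vscal beta (center n (w k))) (center n (disagreement k)))))).
Proof.
  intros i l Hi Hl. unfold vadd, vscal. rewrite !center_eq, HXup, avg_primal_step, avg_dual_gap
    by auto.
  assert (Hdis : avg n (disagreement k) l = avg n (g k) l - avg n (g0 k) l)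
    by (unfold avg, disagreement; rewrite fsum_sub; ring).
  rewrite Hdis. unfold disagreement, w, wstack, g, gstack, g0, smul, mulv, slice. field. lra.
Qed.

Lemma center_dual_step k :
  eq_on n p (center n (w (S k)))
    (vadd (center n (w k)) (vadd (vscal (eta * beta) (smul n L (X k))) (center n (drift k)))).
Proof.
  intros i l Hi Hl. unfold vadd, vscal. rewrite !center_eq, !avg_dual_gap by auto.
  assert (Hdrift : avg n (drift k) l = / beta * (avg n (g0 (S k)) l - avg n (g0 k) l))
    by (unfold avg, drift; rewrite fsum_scal_l, fsum_sub; ring).
  rewrite Hdrift. unfold w at 1, wstack. rewrite HVup by auto.
  unfold drift, w, wstack, g0, smul, mulv, slice. field. lra.
Qed.

Let avg_step_sqn k :
  sqn p (vsub (avg n (X (S k))) (avg n (X k))) = eta * eta * sqn p (avg n (g k)).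
Proof.
  rewrite (sqn_ext p _ (fun l => (- eta) * avg n (g k) l)), sqn_scal; [ring |].
  intros l Hl. unfold vsub. rewrite avg_primal_step by auto. ring.
Qed.

Lemma objective_step k :
  INR n * (fglob n F (avg n (X (S k))) - fglob n F (avg n (X k)))
  <= - eta * ip n p (Hstack n (g0 k)) (Hstack n (g k))
     + eta ^ 2 * Lf / 2 * ip n p (Hstack n (g k)) (Hstack n (g k)).
Proof.
  replace (INR n * (fglob n F (avg n (X (S k))) - fglob n F (avg n (X k))))
    with (fsum n (fun i => F i (avg n (X (S k))) - F i (avg n (X k))))
    by (unfold fglob; rewrite fsum_sub; field; apply not_0_INR; lia).
  rewrite <- (ip_Hstack_r n p (g0 k) (g k) n_pos).
  transitivity (fsum n (fun i => - eta * dot p (g0 k i) (avg n (g k))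
                                 + Lf / 2 * (eta * eta * sqn p (avg n (g k))))).
  - apply fsum_le; intros i Hi.
    pose proof (descent_lemma p (F i) (G i) Lf (fun z => HG i z Hi) (fun z z' => HLip i z z' Hi)
                  (avg n (X k)) (avg n (X (S k)))) as Hd.
    replace (dot p (G i (avg n (X k))) (vsub (avg n (X (S k))) (avg n (X k))))
      with (- eta * dot p (g0 k i) (avg n (g k))) in Hd.
    + rewrite avg_step_sqn in Hd. lra.
    + unfold dot. rewrite <- fsum_scal_l. apply fsum_ext; intros l Hl.
      unfold vsub. rewrite avg_primal_step by auto. unfold g0, g0stack. ring.
  - right. rewrite fsum_add, !fsum_scal_l. unfold ip, Hstack. rewrite !fsum_const.
    unfold sqn. lra.
Qed.


Lemma disagreement_sq_le k :
  ip n p (disagreement k) (disagreement k) <= Lf * Lf * ip n p (center n (X k)) (center n (X k)).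
Proof.
  unfold ip. rewrite <- fsum_scal_l. apply fsum_le; intros i Hi.
  apply (sqn_le_of_norm_le p (vsub (G i (X k i)) (G i (avg n (X k))))), HLip; auto.
Qed.

Lemma gradient_drift_sq_le k :
  ip n p (drift k) (drift k)
  <= eta * eta * Lf * Lf * (/ beta * / beta) * ip n p (Hstack n (g k)) (Hstack n (g k)).
Proof.
  unfold ip at 2, Hstack. rewrite <- fsum_scal_l. apply fsum_le; intros i Hi.
  change (sqn p (fun l => / beta * vsub (G i (avg n (X (S k)))) (G i (avg n (X k))) l)
          <= eta * eta * Lf * Lf * (/ beta * / beta) * sqn p (avg n (g k))).
  rewrite sqn_scal.
  pose proof (sqn_le_of_norm_le p _ _ _ (HLip i (avg n (X (S k))) (avg n (X k)) Hi)) as H.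
  rewrite avg_step_sqn in H.
  replace (eta * eta * Lf * Lf * (/ beta * / beta) * sqn p (avg n (g k)))
    with (/ beta * / beta * (Lf * Lf * (eta * eta * sqn p (avg n (g k))))) by ring.
  apply Rmult_le_compat_l; [nra | exact H].
Qed.

Lemma objective_descent k :
  INR n * (fglob n F (avg n (X (S k))) - fglob n F (avg n (X k)))
  <= eta / 2 * (Lf * Lf) * ip n p (center n (X k)) (center n (X k))
     - eta / 2 * ip n p (Hstack n (g k)) (Hstack n (g k))
     - eta / 2 * ip n p (Hstack n (g0 k)) (Hstack n (g0 k))
     + eta ^ 2 * Lf / 2 * ip n p (Hstack n (g k)) (Hstack n (g k)).
Proof.
  assert (HH : eq_on n p (Hstack n (disagreement k))
                         (vadd (Hstack n (g k)) (vscal (-1) (Hstack n (g0 k)))))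
    by (intros i l _ _; unfold Hstack, avg, disagreement, vadd, vscal; rewrite fsum_sub; ring).
  assert (Hpol := ip_ext n p _ _ _ _ HH HH).
  rewrite ip_expand in Hpol. rewrite !ip_scall, !ip_scalr in Hpol.
  rewrite (ip_comm n p (Hstack n (g k)) (Hstack n (g0 k))) in Hpol.
  pose proof (ip_Hstack_le n p (disagreement k) n_pos).
  pose proof (disagreement_sq_le k). pose proof (objective_step k).
  assert (0 <= eta * (Lf * Lf * ip n p (center n (X k)) (center n (X k))
                      - ip n p (Hstack n (disagreement k)) (Hstack n (disagreement k))))
    by (apply Rmult_le_pos; lra).
  apply (f_equal (Rmult eta)) in Hpol. lra.
Qed.

Lemma Lyap_step_le k :
  let A2 := ip n p (center n (X k)) (center n (X k)) in
  let B2 := ip n p (center n (w k)) (center n (w k)) in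
  let D2 := ip n p (center n (disagreement k)) (center n (disagreement k)) in
  let E2 := ip n p (center n (drift k)) (center n (drift k)) in
  let G2 := ip n p (Hstack n (g k)) (Hstack n (g k)) in
  let H2 := ip n p (Hstack n (g0 k)) (Hstack n (g0 k)) in
  Lyap n p alpha beta Q F G fstar (X (S k)) (Vv (S k))
  - Lyap n p alpha beta Q F G fstar (X k) (Vv k)
  <= - eta * ((alpha - beta) * rho2 - 1) * A2
     - eta * (beta - / 2 - alpha * / beta * / beta / 2 - / beta * / rho2 / 2) * B2
     + eta * D2 + / eta * (1 + alpha + beta * / rho2) / 2 * E2
     + eta ^ 2 * ((2 * alpha ^ 2 + beta ^ 2) * rho ^ 2 + beta ^ 2 * rho) * A2
     + 2 * eta ^ 2 * beta ^ 2 * B2 + 2 * eta ^ 2 * D2 + (1 + alpha / beta + / rho2) * E2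
     + eta / 2 * (Lf * Lf) * A2 - eta / 2 * G2 - eta / 2 * H2 + eta ^ 2 * Lf / 2 * G2.
Proof.
  intros A2 B2 D2 E2 G2 H2. unfold A2, B2, D2, E2, G2, H2.
  pose proof Hrho2 as [_ [Hr2 _]].
  rewrite !Lyap_eq. fold (w k) (w (S k)).
  rewrite (network_energy_ext n p alpha beta Q _ _ _ _
                       (center_primal_step k) (center_dual_step k)).
  set (x := X k). set (l := smul n L x).
  assert (HLK : eq_on n p (smul n L (center n x)) l) by apply smul_laplacian_center.
  assert (Hcc : forall z, rho2 * ip n p (center n z) (smul n Q (center n z))
                          <= ip n p (center n z) (center n z)).
  { intros z. rewrite <- (ip_ext n p _ _ _ _ (center_idem n p A rho2 Hrho2 z)
                                           (center_idem n p A rho2 Hrho2 z)).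
    apply (ip_pinv_le n p A HAsym HAnn Hconn rho rho2 Hrho Hrho2 Q HQ). }
  assert (HQl : forall z, ip n p z (smul n Q l) = ip n p z (center n x))
    by (intros z; apply ip_ext;
        [apply eq_on_refl | apply (smul_pinv_laplacian n p A HAsym HAnn Hconn rho2 Hrho2 Q HQ)]).
  assert (Hle : ip n p (center n x) l <= rho * ip n p (center n x) (center n x)).
  { rewrite <- (ip_ext n p _ _ _ _ (eq_on_refl n p _) HLK).
    apply (ip_laplacian_le n p A HAsym HAnn rho rho2 Hrho Hrho2). }
  assert (Hll : ip n p l l <= rho * rho * ip n p (center n x) (center n x)).
  { rewrite <- (ip_ext n p _ _ _ _ HLK HLK).
    apply (ip_laplacian_sq_le n p A HAsym HAnn rho rho2 Hrho Hrho2). }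
  pose proof (network_energy_descent n p Q (ip_pinv_sym n p A HAsym HAnn Hconn rho2 Hrho2 Q HQ)
    (ip_pinv_psd n p A HAsym HAnn Hconn rho2 Hrho2 Q HQ) alpha beta eta Hb rho rho2 Hab Heta Hr2
    (center n x) (center n (w k)) l (center n (disagreement k)) (center n (drift k)) HQl
    (ip_laplacian_ge n p A HAsym HAnn Hconn rho rho2 Hrho Hrho2 Q HQ x) Hle Hll
    (Hcc (w k)) (Hcc (drift k))) as Hnet.
  pose proof (objective_descent k) as Hobj.
  fold x in Hobj. lra.
Qed.


Lemma quad_Kmat z : quad n p (Kmat n) z = ip n p (center n z) (center n z).
Proof.
  unfold quad. rewrite bil_eq_ip_smul, <- (ip_center_r n p A rho2 Hrho2).
  apply ip_ext; [apply eq_on_refl | apply smul_Kmat].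
Qed.

Lemma drift_terms_le k :
  let E2 := ip n p (center n (drift k)) (center n (drift k)) in
  let G2 := ip n p (Hstack n (g k)) (Hstack n (g k)) in
  / eta * (1 + alpha + beta * / rho2) / 2 * E2 + (1 + alpha / beta + / rho2) * E2
  <= eta * (Lf * Lf) * (/ beta * / beta + alpha * / beta * / beta + / beta * / rho2) / 2 * G2
     + eta ^ 2 * (1 + alpha / beta + / rho2) * (/ beta * / beta) * (Lf * Lf) * G2.
Proof.
  intros E2 G2.
  pose proof (Rle_trans _ _ _ (ip_center_le n p (drift k) n_pos) (gradient_drift_sq_le k)) as HE.
  fold E2 G2 in HE.
  pose proof Hrho2 as [_ [Hr2 _]].
  assert (Hie : 0 < / eta) by (apply Rinv_0_lt_compat; lra).
  assert (Hbr : 0 < beta * / rho2) by (apply Rmult_lt_0_compat; [| apply Rinv_0_lt_compat]; lra).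
  assert (Hab' : 0 < alpha * / beta) by (apply Rmult_lt_0_compat; [| apply Rinv_0_lt_compat]; lra).
  assert (Hir : 0 < / rho2) by (apply Rinv_0_lt_compat; lra).
  assert (HE1 : / eta * (1 + alpha + beta * / rho2) / 2 * E2
                <= / eta * (1 + alpha + beta * / rho2) / 2
                   * (eta * eta * Lf * Lf * (/ beta * / beta) * G2)).
  { apply Rmult_le_compat_l; [| exact HE].
    unfold Rdiv. apply Rmult_le_pos; [apply Rmult_le_pos |]; lra. }
  assert (HE2 : (1 + alpha / beta + / rho2) * E2
                <= (1 + alpha / beta + / rho2) * (eta * eta * Lf * Lf * (/ beta * / beta) * G2))
    by (apply Rmult_le_compat_l; [unfold Rdiv; lra | exact HE]).
  replace (eta * (Lf * Lf) * (/ beta * / beta + alpha * / beta * / beta + / beta * / rho2) / 2 * G2)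
    with (/ eta * (1 + alpha + beta * / rho2) / 2
          * (eta * eta * Lf * Lf * (/ beta * / beta) * G2)) by (field; lra).
  lra.
Qed.

Lemma Lyap_descent k :
  Lyap n p alpha beta Q F G fstar (X (S k)) (Vv (S k))
  <= Lyap n p alpha beta Q F G fstar (X k) (Vv k)
     - eta * (((alpha - beta) * rho2 - / 2 * (2 + 3 * Lf ^ 2))
              - eta * (beta ^ 2 * rho + (2 * alpha ^ 2 + beta ^ 2) * rho ^ 2 + 5 / 2 * Lf ^ 2))
       * quad n p (Kmat n) (X k)
     - eta * ((beta - / 2 - alpha / (2 * beta ^ 2) - / (2 * beta * rho2))
              - eta * (2 * beta ^ 2 + / 2))
       * quad n p (Kmat n) (wstack n beta G (X k) (Vv k))
     - eta * ((/ 4 - / (2 * beta) * (/ beta + / rho2 + alpha / beta) * Lf ^ 2)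
              - eta * (/ beta ^ 2 * (1 + / rho2 + alpha / beta) * Lf ^ 2 + Lf * (1 + Lf) / 2))
       * sqn_stack n p (Hstack n (gstack G (X k)))
     - eta / 4 * sqn_stack n p (Hstack n (g0stack n G (X k))).
Proof.
  pose proof (Lyap_step_le k) as Hstep. cbv zeta in Hstep.
  rewrite !quad_Kmat. unfold sqn_stack. fold (w k) (g k) (g0 k).
  change (fsum n (fun i => sqn p (Hstack n (g k) i)))
    with (ip n p (Hstack n (g k)) (Hstack n (g k))).
  change (fsum n (fun i => sqn p (Hstack n (g0 k) i)))
    with (ip n p (Hstack n (g0 k)) (Hstack n (g0 k))).
  pose proof (Rle_trans _ _ _ (ip_center_le n p (disagreement k) n_pos) (disagreement_sq_le k))
    as HD.
  set (A2 := ip n p (center n (X k)) (center n (X k))) in *.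
  set (B2 := ip n p (center n (w k)) (center n (w k))) in *.
  set (G2 := ip n p (Hstack n (g k)) (Hstack n (g k))) in *.
  set (H2 := ip n p (Hstack n (g0 k)) (Hstack n (g0 k))) in *.
  set (D2 := ip n p (center n (disagreement k)) (center n (disagreement k))) in *.
  set (E2 := ip n p (center n (drift k)) (center n (drift k))) in *.
  pose proof (drift_terms_le k) as HE. cbv zeta in HE. fold E2 G2 in HE.
  pose proof Hrho2 as [_ [Hr2 _]].
  assert (HD' : (eta + 2 * eta ^ 2) * D2 <= (eta + 2 * eta ^ 2) * (Lf * Lf * A2))
    by (apply Rmult_le_compat_l; [nra | exact HD]).
  assert (HA : 0 <= eta ^ 2 * (Lf * Lf) * A2)
    by (apply Rmult_le_pos; [nra | apply ip_self_nonneg]).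
  assert (HB : 0 <= eta ^ 2 * B2) by (apply Rmult_le_pos; [nra | apply ip_self_nonneg]).
  assert (HG2 : 0 <= eta * G2) by (apply Rmult_le_pos; [lra | apply ip_self_nonneg]).
  assert (HLG : 0 <= eta ^ 2 * (Lf * Lf) * G2)
    by (apply Rmult_le_pos; [nra | apply ip_self_nonneg]).
  assert (HH2 : 0 <= eta * H2) by (apply Rmult_le_pos; [lra | apply ip_self_nonneg]).
  replace (alpha / (2 * beta ^ 2)) with (alpha * / beta * / beta / 2) by (field; lra).
  replace (/ (2 * beta * rho2)) with (/ beta * / rho2 / 2) by (field; lra).
  replace (/ (2 * beta) * (/ beta + / rho2 + alpha / beta) * Lf ^ 2)
    with ((/ beta * / beta + alpha * / beta * / beta + / beta * / rho2) / 2 * (Lf * Lf))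
    by (field; lra).
  replace (/ beta ^ 2 * (1 + / rho2 + alpha / beta) * Lf ^ 2)
    with ((1 + alpha / beta + / rho2) * (/ beta * / beta) * (Lf * Lf)) by (field; lra).
  unfold Rdiv in *. lra.
Qed.
End Algorithm.

Theorem lemma6
  (n p : nat)
  (A : nat -> nat -> R)
  (HAsym : forall i j, A i j = A j i)
  (HAnn : forall i j, 0 <= A i j)
  (* (A1) *)
  (Hconn : connected n A)
  (rho rho2 : R)
  (Hrho : largest_eigenvalue n (laplacian n A) rho)
  (Hrho2 : smallest_pos_eigenvalue n (laplacian n A) rho2)
  (Q : nat -> nat -> R)
  (HQ : mp_pinv n (laplacian n A) Q)
  (F : nat -> vec -> R) (G : nat -> vec -> vec)
  (HG : forall i x, (i < n)%nat -> is_grad p (F i) (G i x) x)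
  (* (A2) *)
  (fstar : R)
  (Hfstar_att : exists xs, fglob n F xs = fstar)
  (Hfstar_low : forall x, fstar <= fglob n F x)
  (* (A3) *)
  (Lf : R)
  (HLip : forall i x y, (i < n)%nat ->
            norm p (vsub (G i x) (G i y)) <= Lf * norm p (vsub x y))
  (alpha beta eta : R)
  (Hab : alpha > beta) (Hb : beta > 0) (Heta : eta > 0)
  (* Algorithm 1: X k i = x_{i,k}, Vv k i = v_{i,k} *)
  (X Vv : nat -> nat -> vec)
  (Hv0 : forall l, (l < p)%nat -> fsum n (fun j => Vv 0%nat j l) = 0)
  (HXup : forall k i l, (i < n)%nat -> (l < p)%nat ->
     X (S k) i l = X k i l - eta * (alpha * fsum n (fun j => laplacian n A i j * X k j l)
                                    + beta * Vv k i l + G i (X k i) l))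
  (HVup : forall k i l, (i < n)%nat -> (l < p)%nat ->
     Vv (S k) i l = Vv k i l + eta * beta * fsum n (fun j => laplacian n A i j * X k j l)) :
  let eps1 := (alpha - beta) * rho2 - / 2 * (2 + 3 * Lf ^ 2) in
  let eps2 := beta ^ 2 * rho + (2 * alpha ^ 2 + beta ^ 2) * rho ^ 2 + 5 / 2 * Lf ^ 2 in
  let eps3 := beta - / 2 - alpha / (2 * beta ^ 2) - / (2 * beta * rho2) in
  let eps4 := 2 * beta ^ 2 + / 2 in
  let eps5 := / 4 - / (2 * beta) * (/ beta + / rho2 + alpha / beta) * Lf ^ 2 in
  let eps6 := / beta ^ 2 * (1 + / rho2 + alpha / beta) * Lf ^ 2 + Lf * (1 + Lf) / 2 in
  forall k : nat,
    Lyap n p alpha beta Q F G fstar (X (S k)) (Vv (S k))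
    <= Lyap n p alpha beta Q F G fstar (X k) (Vv k)
       - eta * (eps1 - eta * eps2) * quad n p (Kmat n) (X k)
       - eta * (eps3 - eta * eps4) * quad n p (Kmat n) (wstack n beta G (X k) (Vv k))
       - eta * (eps5 - eta * eps6) * sqn_stack n p (Hstack n (gstack G (X k)))
       - eta / 4 * sqn_stack n p (Hstack n (g0stack n G (X k))).
Proof.
  intros eps1 eps2 eps3 eps4 eps5 eps6 k.
  exact (Lyap_descent n p A HAsym HAnn Hconn rho rho2 Hrho Hrho2 Q HQ F G HG fstar Lf HLip
           alpha beta eta Hab Hb Heta X Vv Hv0 HXup HVup k).
Qed.
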